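(* Fix $Y$, $q>0$, $\delta>0$, $\rho\in\mathbb R$, and let $(a^*(\beta),b^*(\beta))$ be the selected pair as a function of $\beta\in(0,1)$. Then: 1. If $\psi_Y'(0+)+q\rho<0$, then for all $\beta<1$ sufficiently close to $1$ one has $0<a^*(\beta)<b^*(\beta)$ and $Z^{(q)}(b^*(\beta)-a^*(\beta))=\beta^{-1}$. In particular, $b^*(\beta)-a^*(\beta)\to0$ as $\beta\uparrow1$. 2. If $\psi_Y'(0+)+q\rho>0$, then $a^*(\beta)=b^*(\beta)=0$ for all $\beta<1$ sufficiently close to $1$. 3. If $\psi_Y'(0+)+q\rho=0$ and $\psi_X'(0+)>0$, then $b^*(\beta)>0$ for every $\beta\in(0,1)$, and $a^*(\beta)\to0$ and $b^*(\beta)\to0$ as $\beta\uparrow1$. 4. If $\psi_Y'(0+)+q\rho=0$ and $\psi_X'(0+)\le0$, then $a^*(\beta)=b^*(\beta)=0$ for all $\beta\in(0,1)$.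
   Context: Let $Y$ be a spectrally positive Lévy process (not a subordinator) with Laplace exponent $\psi_Y(\theta)=\log\mathbb E[e^{-\theta Y_1}]$ and $\mathbb E[Y_1]=-\psi_Y'(0+)<\infty$. Let $q>0$, $\delta>0$, and $\psi_X(\theta)=\psi_Y(\theta)+\delta\theta$ (so $\psi_X'(0+)=\psi_Y'(0+)+\delta$). The scale functions $\mathbb W^{(q)},W^{(q)}$ vanish on $(-\infty,0)$, are continuous and strictly increasing on $[0,\infty)$, and have Laplace transforms $1/(\psi_Y(\theta)-q)$ and $1/(\psi_X(\theta)-q)$. Let $\mathbb Z^{(q)}(x)=1+q\int_0^x\mathbb W^{(q)}$, $Z^{(q)}(x)=1+q\int_0^xW^{(q)}$, $\overline Z^{(q)}(x)=\int_0^xZ^{(q)}$, and $R^{(q)}(z)=\overline Z^{(q)}(z)+\psi_X'(0+)/q$. Let $\tilde r^{(q)}_c(z)=R^{(q)}(z)+\delta\int_c^z\mathbb W^{(q)}(z-y)Z^{(q)}(y)\,dy$. For $\beta\in(0,1)$ and $\rho\in\mathbb R$, let $\Gamma(a,b)=\delta\mathbb Z^{(q)}(a)-q\rho-q\beta\tilde r^{(q)}_{b-a}(b)$ for $0\le a\le b$. Selected pair: if $\Gamma(0,0)=\delta-q\rho-\beta\psi_X'(0+)\le0$, then $a^*=b^*=0$. Otherwise, $b^*>0$ is the unique root of $\min_{0\le a\le b^*}\Gamma(a,b^* )=0$, and $a^*$ is the unique minimizer of $a\mapsto\Gamma(a,b^* )$ on $[0,b^*]$. *)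

From Stdlib Require Import Reals Lra ClassicalEpsilon.
Open Scope R_scope.

(* Riemann integral of f over [a,b] (signed, as Stdlib's RiemannInt); the value
   is independent of the integrability proof (RiemannInt_P5).  If f is not
   Riemann integrable on [a,b], the value is junk (0); it is only used where
   integrability holds. *)
Definition RInt (f : R -> R) (a b : R) : R :=
  match excluded_middle_informative (inhabited (Riemann_integrable f a b)) with
  | left H => RiemannInt (epsilon H (fun _ => True))
  | right _ => 0
  end.

Definition ImpInt0 (f : R -> R) (L : R) : Prop :=
  (forall a b, 0 < a -> a <= b -> inhabited (Riemann_integrable f a b)) /\
  (forall eps, 0 < eps -> exists d, 0 < d /\ exists M, 0 < M /\
     forall a b, 0 < a -> a < d -> M < b -> Rabs (RInt f a b - L) < eps).

(* The value of the improper integral (junk 0 if it does not exist). *)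
Definition ImpVal0 (f : R -> R) : R :=
  epsilon (inhabits 0) (fun L => ImpInt0 f L).

(* A spectrally positive Levy process Y with E[Y_1] finite is described by its
   Levy--Khintchine triplet: a coefficient c = -E[Y_1], a Gaussian coefficient
   s = sigma^2 >= 0, and a Levy measure Pi on (0,oo), represented by its tail
   Pbar(x) = Pi((x,oo)), x > 0.  Conditions: Pbar is nonnegative, nonincreasing,
   right-continuous, vanishes at +oo, and int_0^oo min(x,1) Pbar(x) dx < oo,
   which is equivalent to int (x^2 /\ x) Pi(dx) < oo (Levy measure with finite
   first moment of large jumps). *)
Definition LevyTriplet (c s : R) (Pbar : R -> R) : Prop :=
  0 <= s /\
  (forall x, 0 < x -> 0 <= Pbar x) /\
  (forall x y, 0 < x -> x <= y -> Pbar y <= Pbar x) /\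
  (forall x, 0 < x -> forall eps, 0 < eps -> exists d, 0 < d /\
      forall y, x <= y < x + d -> Rabs (Pbar y - Pbar x) < eps) /\
  (forall eps, 0 < eps -> exists M, forall x, M < x -> Pbar x < eps) /\
  (exists L, ImpInt0 (fun x => Rmin x 1 * Pbar x) L).

(* Laplace exponent psi_Y(theta) = log E[exp(-theta Y_1)]
     = c theta + s theta^2/2 + int_(0,oo) (e^{-theta x} - 1 + theta x) Pi(dx),
   where the jump integral is written (integration by parts against the tail)
   as int_0^oo theta (1 - e^{-theta x}) Pbar(x) dx.  Used for theta >= 0. *)
Definition psiY (c s : R) (Pbar : R -> R) (theta : R) : R :=
  c * theta + s * theta ^ 2 / 2 +
  ImpVal0 (fun x => theta * (1 - exp (- (theta * x))) * Pbar x).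

(* Y is a subordinator iff s = 0, int x Pi(dx) = int_0^oo Pbar < oo and the
   drift -(c + int x Pi(dx)) is >= 0. *)
Definition NotSubordinator (c s : R) (Pbar : R -> R) : Prop :=
  ~ (s = 0 /\ exists L, ImpInt0 Pbar L /\ c + L <= 0).

Definition RightDeriv0 (f : R -> R) (m : R) : Prop :=
  forall eps, 0 < eps -> exists d, 0 < d /\
    forall h, 0 < h < d -> Rabs ((f h - f 0) / h - m) < eps.

Definition ScaleFun (psi : R -> R) (q : R) (W : R -> R) : Prop :=
  (forall x, x < 0 -> W x = 0) /\
  (forall x, 0 <= x -> forall eps, 0 < eps -> exists d, 0 < d /\
      forall y, 0 <= y -> Rabs (y - x) < d -> Rabs (W y - W x) < eps) /\
  (forall x y, 0 <= x -> x < y -> W x < W y) /\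
  (exists theta0, forall theta, theta0 < theta ->
      ImpInt0 (fun x => exp (- (theta * x)) * W x) (1 / (psi theta - q))).

Definition Zq (W : R -> R) (q x : R) : R := 1 + q * RInt W 0 x.

Definition Zbarq (W : R -> R) (q x : R) : R := RInt (fun y => Zq W q y) 0 x.

(* R^(q)(z) = Zbar^(q)(z) + psi_X'(0+)/q *)
Definition Rq (W : R -> R) (q dX z : R) : R := Zbarq W q z + dX / q.

Definition rtilde (WW W : R -> R) (q delta dX c z : R) : R :=
  Rq W q dX z + delta * RInt (fun y => WW (z - y) * Zq W q y) c z.

Definition Gamma (WW W : R -> R) (q delta rho dX beta a b : R) : R :=
  delta * Zq WW q a - q * rho - q * beta * rtilde WW W q delta dX (b - a) b.

(* b is a root of b |-> min_{0<=a<=b} G(a,b) = 0 *)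
Definition MinZero (G : R -> R -> R) (b : R) : Prop :=
  (exists a0, 0 <= a0 <= b /\ G a0 b = 0) /\
  (forall a, 0 <= a <= b -> 0 <= G a b).

Definition Selected (G : R -> R -> R) (a b : R) : Prop :=
  (G 0 0 <= 0 /\ a = 0 /\ b = 0) \/
  (0 < G 0 0 /\ 0 < b /\ MinZero G b /\
   (forall b', 0 < b' -> MinZero G b' -> b' = b) /\
   0 <= a <= b /\
   (forall a', 0 <= a' <= b -> G a b <= G a' b) /\
   (forall a', 0 <= a' <= b -> (forall a'', 0 <= a'' <= b -> G a' b <= G a'' b) ->
      a' = a)).

Definition TendsTo0At1 (f : R -> R) : Prop :=
  forall eps, 0 < eps -> exists eta, 0 < eta /\
    forall beta, 1 - eta < beta < 1 -> Rabs (f beta) < eps.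

Definition NearOne (P : R -> Prop) : Prop :=
  exists beta0, 0 < beta0 < 1 /\ forall beta, beta0 < beta < 1 -> P beta.

(* Put kappa = delta - q rho - psi_X'(0+) = -(psi_Y'(0+) + q rho).  Then
   Gamma(0,0) = kappa + (1 - beta) psi_X'(0+), and substituting in the convolution gives
   Gamma(a2,b) - Gamma(a1,b) = delta q int_a1^a2 WW(t) (1 - beta Z(b - t)) dt,
   so a |-> Gamma(a,b) decreases while beta Z(b - a) > 1 and increases afterwards.
   If Gamma(0,0) <= 0 the pair is (0,0) (parts 2 and 4).  Otherwise Gamma(0,bstar) >= 0
   gives q beta bstar <= q beta Zbar(bstar) <= Gamma(0,0), which is (1 - beta) psi_X'(0+)
   in part 3.  In part 1, Gamma(0,0) >= kappa/2 near beta = 1; this forces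
   beta Z(bstar) > 1, so the minimiser astar is interior and satisfies the first-order
   condition beta Z(bstar - astar) = 1.
   All of this needs W, WW >= 0 on [0,oo), which follows from their Laplace transforms
   because the Laplace exponent of a non-subordinator grows at least linearly. *)

From Stdlib Require Import Reals Lra Lia RList FunctionalExtensionality Classical ClassicalEpsilon.
From Coquelicot Require Coquelicot.
Open Scope R_scope.

(** * Riemann integrals *)

Definition nonincreasing_on (f : R -> R) (a b : R) : Prop :=
  forall x y, a <= x -> x <= y -> y <= b -> f y <= f x.

Definition nondecreasing_on (f : R -> R) (a b : R) : Prop :=
  forall x y, a <= x -> x <= y -> y <= b -> f x <= f y.

Lemma IsStepFun_ext_open (f g : R -> R) (a b : R) : a <= b ->
  (forall x, a < x < b -> f x = g x) -> IsStepFun f a b -> IsStepFun g a b.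
Proof.
  intros Hab Hfg [l [lf (H1 & H2 & H3 & H4 & H5)]].
  exists l, lf; repeat split; auto.
  intros i Hi x Hx; rewrite <- (H5 i Hi x Hx); symmetry; apply Hfg.
  unfold open_interval in Hx.
  assert (Ha : pos_Rl l 0 <= pos_Rl l i).
  { apply RList_P5; auto. apply RList_P3. exists i; split; auto; lia. }
  assert (Hb : pos_Rl l (S i) <= pos_Rl l (pred (length l))).
  { apply RList_P7; auto. apply RList_P3. exists (S i); split; auto; lia. }
  rewrite H2, Rmin_left in Ha by lra. rewrite H3, Rmax_right in Hb by lra. lra.
Qed.

Lemma RiemannInt_SF_ext_open (a b : R) (f g : StepFun a b) : a <= b ->
  (forall x, a < x < b -> f x = g x) -> RiemannInt_SF f = RiemannInt_SF g.
Proof.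
  intros Hab H; apply Rle_antisym; apply StepFun_P37; auto;
    intros x Hx; rewrite (H x Hx); lra.
Qed.

Lemma RiemannInt_SF_nonneg (a b : R) (f : StepFun a b) : a <= b ->
  (forall x, a < x < b -> 0 <= f x) -> 0 <= RiemannInt_SF f.
Proof.
  intros Hab H.
  replace 0 with (RiemannInt_SF (mkStepFun (StepFun_P4 a b 0)))
    by (rewrite StepFun_P18; ring).
  apply StepFun_P37; auto.
Qed.

Definition glue_at (m : R) (f g : R -> R) (t : R) : R :=
  if Rle_dec t m then f t else g t.

Lemma StepFun_glue (a m b : R) (f : StepFun a m) (g : StepFun m b) :
  a <= m -> m <= b ->
  { h : StepFun a b | (forall t, h t = glue_at m f g t) /\
                      RiemannInt_SF h = RiemannInt_SF f + RiemannInt_SF g }.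
Proof.
  intros Ham Hmb.
  assert (Sl : IsStepFun (glue_at m f g) a m).
  { apply (IsStepFun_ext_open f); auto; [|apply pre].
    intros x Hx; unfold glue_at; destruct (Rle_dec x m); auto; lra. }
  assert (Sr : IsStepFun (glue_at m f g) m b).
  { apply (IsStepFun_ext_open g); auto; [|apply pre].
    intros x Hx; unfold glue_at; destruct (Rle_dec x m); auto; lra. }
  exists (mkStepFun (StepFun_P41 Ham Hmb Sl Sr)); split; [reflexivity|].
  rewrite <- (StepFun_P43 Sl Sr (StepFun_P41 Ham Hmb Sl Sr)).
  f_equal; apply RiemannInt_SF_ext_open; auto; intros x Hx; simpl; unfold glue_at;
    destruct (Rle_dec x m); auto; lra.
Qed.

(* On each cell of a uniform subdivision of mesh h, approximate f by its value at the
   left end; the errors telescope to h (f a - f b). *)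
Lemma nonincreasing_step_approx (f : R -> R) (h : R) (N : nat) (a b : R) :
  0 < h -> b = a + INR (S N) * h -> nonincreasing_on f a b ->
  { phi : StepFun a b & { psi : StepFun a b |
     (forall t, a <= t <= b -> Rabs (f t - phi t) <= psi t) /\
     RiemannInt_SF psi <= h * (f a - f b) } }.
Proof.
  intros Hh; revert a b; induction N as [|N IH]; intros a b Hb Hf.
  - exists (mkStepFun (StepFun_P4 a b (f a))), (mkStepFun (StepFun_P4 a b (f a - f b))).
    simpl in Hb; split.
    + intros t Ht; simpl; unfold fct_cte.
      assert (f t <= f a) by (apply Hf; lra). assert (f b <= f t) by (apply Hf; lra).
      rewrite Rabs_left1; lra.
    + rewrite StepFun_P18, Hb; right; ring.
  - set (m := a + h).
    assert (Hmb : b = m + INR (S N) * h) by (rewrite Hb; unfold m; rewrite !S_INR; ring).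
    assert (HN : 0 <= INR (S N) * h) by (apply Rmult_le_pos; [apply pos_INR | lra]).
    assert (Ham : a <= m) by (unfold m; lra).
    destruct (IH m b Hmb) as [phi2 [psi2 [Happ Hint]]].
    { intros x y Hx Hxy Hy; apply Hf; unfold m in *; lra. }
    destruct (StepFun_glue a m b (mkStepFun (StepFun_P4 a m (f a))) phi2) as [phi [Ephi _]];
      [lra..|].
    destruct (StepFun_glue a m b (mkStepFun (StepFun_P4 a m (f a - f m))) psi2)
      as [psi [Epsi Ipsi]]; [lra..|].
    exists phi, psi; split.
    + intros t Ht; rewrite Ephi, Epsi; unfold glue_at.
      destruct (Rle_dec t m); [|apply Happ; lra].
      simpl; unfold fct_cte.
      assert (f t <= f a) by (apply Hf; lra). assert (f m <= f t) by (apply Hf; lra).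
      rewrite Rabs_left1; lra.
    + rewrite Ipsi, StepFun_P18. replace (m - a) with h by (unfold m; ring).
      assert (f b <= f m) by (apply Hf; lra). nra.
Qed.

Lemma nonincreasing_integrable (f : R -> R) (a b : R) : a <= b ->
  nonincreasing_on f a b -> Riemann_integrable f a b.
Proof.
  intros Hab Hf.
  destruct (Req_EM_T a b) as [<-|Hne]; [apply RiemannInt_P7|].
  intro eps.
  assert (Hfab : 0 <= f a - f b) by (assert (f b <= f a) by (apply Hf; lra); lra).
  assert (HN : exists N : nat, (b - a) * (f a - f b) / eps < INR (S N)).
  { destruct (INR_unbounded ((b - a) * (f a - f b) / eps)) as [n Hn].
    exists n; rewrite S_INR; lra. }
  apply constructive_indefinite_description in HN; destruct HN as [N HN].
  assert (HSN : 0 < INR (S N)) by (apply lt_0_INR; lia).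
  pose proof (cond_pos eps) as Heps.
  set (h := (b - a) / INR (S N)).
  assert (Hh : 0 < h) by (unfold h; apply Rdiv_lt_0_compat; lra).
  destruct (nonincreasing_step_approx f h N a b Hh) as [phi [psi [Happ Hint]]]; auto.
  { unfold h; field; lra. }
  exists phi, psi; split.
  - intros t Ht; rewrite Rmin_left, Rmax_right in Ht by lra; auto.
  - assert (0 <= RiemannInt_SF psi).
    { apply RiemannInt_SF_nonneg; [lra|]; intros x Hx.
      apply Rle_trans with (Rabs (f x - phi x)); [apply Rabs_pos | apply Happ; lra]. }
    rewrite Rabs_right by lra.
    apply Rle_lt_trans with (h * (f a - f b)); auto.
    assert (Hlt : (b - a) * (f a - f b) < eps * INR (S N)).
    { apply (Rmult_lt_compat_r eps) in HN; auto.
      replace ((b - a) * (f a - f b) / eps * eps) with ((b - a) * (f a - f b)) in HN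
        by (field; lra). lra. }
    unfold h; apply (Rmult_lt_reg_r (INR (S N))); auto.
    replace ((b - a) / INR (S N) * (f a - f b) * INR (S N)) with ((b - a) * (f a - f b))
      by (field; lra). lra.
Qed.

Lemma nondecreasing_integrable (f : R -> R) (a b : R) : a <= b ->
  nondecreasing_on f a b -> Riemann_integrable f a b.
Proof.
  intros Hab Hf.
  apply (@Riemann_integrable_ext (fun x => -1 * - f x) f); [intros; ring|].
  apply Riemann_integrable_scal, nonincreasing_integrable; auto.
  intros x y ? ? ?; pose proof (Hf x y); lra.
Qed.

Lemma RInt_RiemannInt (f : R -> R) (a b : R) (pr : Riemann_integrable f a b) :
  RInt f a b = RiemannInt pr.
Proof.
  unfold RInt; destruct (excluded_middle_informative _) as [H|H].
  - apply RiemannInt_P5.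
  - exfalso; apply H; constructor; exact pr.
Qed.

Lemma RInt_point (f : R -> R) (a : R) : RInt f a a = 0.
Proof. rewrite (RInt_RiemannInt _ _ _ (RiemannInt_P7 f a)); apply RiemannInt_P9. Qed.

Lemma RInt_Chasles (f : R -> R) (a b c : R) :
  Riemann_integrable f a b -> Riemann_integrable f b c ->
  RInt f a b + RInt f b c = RInt f a c.
Proof.
  intros p1 p2.
  rewrite (RInt_RiemannInt _ _ _ p1), (RInt_RiemannInt _ _ _ p2),
    (RInt_RiemannInt _ _ _ (RiemannInt_P24 p1 p2)).
  apply RiemannInt_P26.
Qed.

Lemma RInt_le (f g : R -> R) (a b : R) : a <= b ->
  Riemann_integrable f a b -> Riemann_integrable g a b ->
  (forall x, a < x < b -> f x <= g x) -> RInt f a b <= RInt g a b.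
Proof.
  intros Hab p1 p2 H.
  rewrite (RInt_RiemannInt _ _ _ p1), (RInt_RiemannInt _ _ _ p2); apply RiemannInt_P19; auto.
Qed.

Lemma RInt_const (k a b : R) : RInt (fun _ => k) a b = k * (b - a).
Proof. rewrite (RInt_RiemannInt (fun _ => k) a b (RiemannInt_P14 a b k)); apply RiemannInt_P15. Qed.

Lemma RInt_lower_bound (f : R -> R) (a b m : R) : a <= b -> Riemann_integrable f a b ->
  (forall x, a < x < b -> m <= f x) -> m * (b - a) <= RInt f a b.
Proof. intros; rewrite <- RInt_const; apply RInt_le; auto; apply RiemannInt_P14. Qed.

Lemma RInt_upper_bound (f : R -> R) (a b m : R) : a <= b -> Riemann_integrable f a b ->
  (forall x, a < x < b -> f x <= m) -> RInt f a b <= m * (b - a).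
Proof. intros; rewrite <- RInt_const; apply RInt_le; auto; apply RiemannInt_P14. Qed.

Lemma RInt_nonneg (f : R -> R) (a b : R) : a <= b -> Riemann_integrable f a b ->
  (forall x, a < x < b -> 0 <= f x) -> 0 <= RInt f a b.
Proof. intros; replace 0 with (0 * (b - a)) by ring; apply RInt_lower_bound; auto. Qed.

Lemma RInt_lin (f g : R -> R) (a b l : R) :
  Riemann_integrable f a b -> Riemann_integrable g a b ->
  RInt (fun x => f x + l * g x) a b = RInt f a b + l * RInt g a b.
Proof.
  intros p1 p2.
  rewrite (RInt_RiemannInt _ _ _ p1), (RInt_RiemannInt _ _ _ p2),
    (RInt_RiemannInt _ _ _ (RiemannInt_P10 l p1 p2)).
  apply RiemannInt_P13.
Qed.

Lemma Riemann_integrable_ext_on (f g : R -> R) (a b : R) : a <= b ->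
  (forall x, a <= x <= b -> f x = g x) ->
  Riemann_integrable f a b -> Riemann_integrable g a b.
Proof.
  intros Hab H; apply Riemann_integrable_ext.
  intros x Hx; rewrite Rmin_left, Rmax_right in Hx by lra; auto.
Qed.

Lemma Riemann_integrable_scal_l (f : R -> R) (a b k : R) :
  Riemann_integrable f a b -> Riemann_integrable (fun x => k * f x) a b.
Proof.
  intros p; apply (@Riemann_integrable_ext (fun x => 0 + k * f x)); [intros; ring|].
  apply (RiemannInt_P10 k (RiemannInt_P14 a b 0) p).
Qed.

Lemma RInt_scal_l (f : R -> R) (a b k : R) : Riemann_integrable f a b ->
  RInt (fun x => k * f x) a b = k * RInt f a b.
Proof.
  intros p.
  replace (fun x => k * f x) with (fun x => (fun _ => 0) x + k * f x)
    by (apply functional_extensionality; intros; ring).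
  rewrite RInt_lin, RInt_const; [ring | apply RiemannInt_P14 | exact p].
Qed.

Lemma RInt_ext_on (f g : R -> R) (a b : R) : a <= b ->
  (forall x, a <= x <= b -> f x = g x) -> RInt f a b = RInt g a b.
Proof.
  intros Hab H; unfold RInt.
  destruct (excluded_middle_informative (inhabited (Riemann_integrable f a b))) as [[p]|Hf];
  destruct (excluded_middle_informative (inhabited (Riemann_integrable g a b))) as [[p']|Hg].
  - apply RiemannInt_P18; auto; intros x Hx; apply H; lra.
  - exfalso; apply Hg; constructor; exact (Riemann_integrable_ext_on f g a b Hab H p).
  - exfalso; apply Hf; constructor.
    apply (Riemann_integrable_ext_on g f a b Hab); auto; intros; symmetry; auto.
  - reflexivity.
Qed.

Lemma Riemann_integrable_subinterval (f : R -> R) (a b c d : R) :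
  a <= c -> c <= d -> d <= b ->
  Riemann_integrable f a b -> Riemann_integrable f c d.
Proof.
  intros Hac Hcd Hdb p.
  apply (RiemannInt_P22 (b := b)); [apply (RiemannInt_P23 (a := a)); auto; lra | lra].
Qed.

(* Write f g = g(b) f - f (g(b) - g), a difference of two nonincreasing functions. *)
Lemma Riemann_integrable_mul_monotone (f g : R -> R) (a b : R) : a <= b ->
  nonincreasing_on f a b -> nondecreasing_on g a b ->
  (forall x, a <= x <= b -> 0 <= f x) -> (forall x, a <= x <= b -> 0 <= g x) ->
  Riemann_integrable (fun x => f x * g x) a b.
Proof.
  intros Hab Hf Hg Hf0 Hg0.
  apply (Riemann_integrable_ext_on (fun x => g b * f x + (-1) * (f x * (g b - g x))));
    [auto | intros; ring |].
  apply RiemannInt_P10.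
  - apply Riemann_integrable_scal_l, nonincreasing_integrable; auto.
  - apply nonincreasing_integrable; auto; intros x y Hx Hxy Hy.
    pose proof (Hf x y Hx Hxy Hy); pose proof (Hg x y Hx Hxy Hy).
    pose proof (Hg y b ltac:(lra) Hy (Rle_refl b)).
    pose proof (Hf0 y ltac:(lra)); pose proof (Hf0 x ltac:(lra)).
    apply Rmult_le_compat; lra.
Qed.

Lemma RInt_mul_pos (u g : R -> R) (a1 a2 m : R) : a1 < a2 -> 0 < m ->
  Riemann_integrable (fun t => u t * g t) a1 a2 ->
  (forall t, a1 <= t <= a2 -> 0 <= u t) -> nondecreasing_on u a1 a2 ->
  0 < u ((a1 + a2) / 2) -> (forall t, a1 <= t <= a2 -> m <= g t) ->
  0 < RInt (fun t => u t * g t) a1 a2.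
Proof.
  intros H12 Hm p Hu0 Hu Hmid Hg; set (mid := (a1 + a2) / 2) in *.
  assert (Hmid12 : a1 < mid < a2) by (unfold mid; lra).
  assert (Psub : forall c d, a1 <= c -> c <= d -> d <= a2 ->
                   Riemann_integrable (fun t => u t * g t) c d)
    by (intros; apply (Riemann_integrable_subinterval _ a1 a2); auto).
  rewrite <- (RInt_Chasles _ a1 mid a2) by (apply Psub; lra).
  assert (0 <= RInt (fun t => u t * g t) a1 mid).
  { apply RInt_nonneg; [lra | apply Psub; lra |].
    intros t Ht; pose proof (Hu0 t ltac:(lra)); pose proof (Hg t ltac:(lra)); nra. }
  assert (u mid * m * (a2 - mid) <= RInt (fun t => u t * g t) mid a2).
  { apply RInt_lower_bound; [lra | apply Psub; lra |].
    intros t Ht; pose proof (Hu mid t ltac:(lra) ltac:(lra) ltac:(lra)).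
    pose proof (Hg t ltac:(lra)); apply Rmult_le_compat; lra. }
  assert (0 < u mid * m * (a2 - mid)) by (apply Rmult_lt_0_compat; [nra | lra]).
  lra.
Qed.

Module CoquelicotIntegrals.
Import Coquelicot.Coquelicot.

Lemma is_RInt_Riemann (f : R -> R) (a b I : R) : is_RInt f a b I ->
  { pr : Riemann_integrable f a b | RiemannInt pr = I }.
Proof.
  intros H; exists (ex_RInt_Reals_0 f a b (ex_intro _ I H)).
  rewrite <- RInt_Reals; apply is_RInt_unique; exact H.
Qed.

Lemma RiemannInt_exp_neg (t a b : R) : 0 < t ->
  { pr : Riemann_integrable (fun x => exp (- (t * x))) a b |
    RiemannInt pr = (exp (- (t * a)) - exp (- (t * b))) / t }.
Proof.
  intros Ht; apply is_RInt_Riemann.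
  replace ((exp (- (t * a)) - exp (- (t * b))) / t)
    with (minus (- exp (- (t * b)) / t) (- exp (- (t * a)) / t))
    by (unfold minus, plus, opp; simpl; field; lra).
  apply (is_RInt_derive (fun x => - exp (- (t * x)) / t)).
  - intros x _; auto_derive; auto; field; lra.
  - intros x _; apply continuity_pt_filterlim; reg.
Qed.

Lemma RiemannInt_reflect (h : R -> R) (b a1 a2 : R) (p : Riemann_integrable h (b - a2) (b - a1)) :
  { pr : Riemann_integrable (fun t => h (b - t)) a1 a2 | RiemannInt pr = RiemannInt p }.
Proof.
  apply is_RInt_Riemann.
  assert (H : is_RInt h (-1 * a2 + b) (-1 * a1 + b) (RiemannInt p)).
  { rewrite <- (RInt_Reals h _ _ p).
    replace (-1 * a2 + b) with (b - a2) by ring; replace (-1 * a1 + b) with (b - a1) by ring.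
    apply (RInt_correct (V := R_CompleteNormedModule)), ex_RInt_Reals_1, p. }
  apply is_RInt_swap, (is_RInt_comp_lin h (-1) b), (is_RInt_scal _ _ _ (-1)) in H.
  assert (E : forall v : R, scal (-1) (opp v) = v)
    by (intros; unfold scal, opp; simpl; unfold mult; simpl; ring).
  rewrite E in H.
  eapply is_RInt_ext; [|exact H]; intros x _; simpl.
  replace (-1 * x + b) with (b - x) by ring. unfold scal, opp; simpl; unfold mult; simpl; ring.
Qed.

End CoquelicotIntegrals.

Lemma exp_neg_integrable (t a b : R) : 0 < t ->
  Riemann_integrable (fun x => exp (- (t * x))) a b.
Proof. intros Ht; destruct (CoquelicotIntegrals.RiemannInt_exp_neg t a b Ht); auto. Qed.

Lemma RInt_exp_neg (t a b : R) : 0 < t ->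
  RInt (fun x => exp (- (t * x))) a b = (exp (- (t * a)) - exp (- (t * b))) / t.
Proof.
  intros Ht; destruct (CoquelicotIntegrals.RiemannInt_exp_neg t a b Ht) as [pr Hpr].
  rewrite (RInt_RiemannInt _ _ _ pr); exact Hpr.
Qed.

Lemma Riemann_integrable_reflect (h : R -> R) (b a1 a2 : R) :
  Riemann_integrable h (b - a2) (b - a1) -> Riemann_integrable (fun t => h (b - t)) a1 a2.
Proof. intros p; destruct (CoquelicotIntegrals.RiemannInt_reflect h b a1 a2 p); auto. Qed.

Lemma RInt_reflect (h : R -> R) (b a1 a2 : R) : Riemann_integrable h (b - a2) (b - a1) ->
  RInt (fun t => h (b - t)) a1 a2 = RInt h (b - a2) (b - a1).
Proof.
  intros p; destruct (CoquelicotIntegrals.RiemannInt_reflect h b a1 a2 p) as [pr Hpr].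
  rewrite (RInt_RiemannInt _ _ _ pr), (RInt_RiemannInt _ _ _ p); exact Hpr.
Qed.

(** * Improper integrals on (0, +oo) *)

Lemma ImpInt0_unique (f : R -> R) (L1 L2 : R) : ImpInt0 f L1 -> ImpInt0 f L2 -> L1 = L2.
Proof.
  intros [_ H1] [_ H2].
  destruct (Req_dec L1 L2) as [E|Hne]; [exact E|exfalso].
  set (e := Rabs (L1 - L2) / 2).
  assert (He : 0 < e) by (unfold e; pose proof (Rabs_pos_lt (L1 - L2)); lra).
  destruct (H1 e He) as [d1 [Hd1 [M1 [HM1 P1]]]].
  destruct (H2 e He) as [d2 [Hd2 [M2 [HM2 P2]]]].
  set (a := Rmin d1 d2 / 2); set (b := Rmax M1 M2 + 1).
  pose proof (Rmin_l d1 d2); pose proof (Rmin_r d1 d2); pose proof (Rmin_glb_lt d1 d2 0 Hd1 Hd2).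
  pose proof (Rmax_l M1 M2); pose proof (Rmax_r M1 M2).
  specialize (P1 a b ltac:(unfold a; lra) ltac:(unfold a; lra) ltac:(unfold b; lra)).
  specialize (P2 a b ltac:(unfold a; lra) ltac:(unfold a; lra) ltac:(unfold b; lra)).
  assert (Rabs (L1 - L2) <= Rabs (RInt f a b - L2) + Rabs (RInt f a b - L1)).
  { replace (L1 - L2) with ((RInt f a b - L2) - (RInt f a b - L1)) by ring.
    eapply Rle_trans; [apply Rabs_triang|]; rewrite Rabs_Ropp; lra. }
  unfold e in *; lra.
Qed.

Lemma ImpVal0_eq (f : R -> R) (L : R) : ImpInt0 f L -> ImpVal0 f = L.
Proof.
  intros H; apply (ImpInt0_unique f); [|exact H].
  unfold ImpVal0; apply epsilon_spec; exists L; exact H.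
Qed.

Section NonnegativeIntegrand.
Variable f : R -> R.
Hypothesis f_integrable : forall a b, 0 < a -> a <= b -> inhabited (Riemann_integrable f a b).
Hypothesis f_nonneg : forall x, 0 < x -> 0 <= f x.

Lemma RInt_nonneg_le_wider (a b a' b' : R) : 0 < a' -> a' <= a -> a <= b -> b <= b' ->
  RInt f a b <= RInt f a' b'.
Proof.
  intros H0 H1 H2 H3.
  destruct (f_integrable a' a H0 H1) as [p1]; destruct (f_integrable a b ltac:(lra) H2) as [p2].
  destruct (f_integrable b b' ltac:(lra) H3) as [p3].
  rewrite <- (RInt_Chasles f a' a b' p1 (RiemannInt_P24 p2 p3)), <- (RInt_Chasles f a b b' p2 p3).
  assert (0 <= RInt f a' a) by (apply RInt_nonneg; auto; intros; apply f_nonneg; lra).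
  assert (0 <= RInt f b b') by (apply RInt_nonneg; auto; intros; apply f_nonneg; lra).
  lra.
Qed.

Lemma ImpInt0_nonneg_partial_le (L : R) : ImpInt0 f L ->
  forall a b, 0 < a -> a <= b -> RInt f a b <= L.
Proof.
  intros [_ Hlim] a b Ha Hab; apply Rnot_lt_le; intro Hlt.
  destruct (Hlim (RInt f a b - L) ltac:(lra)) as [d [Hd [M [HM P]]]].
  set (a' := Rmin a (d / 2)); set (b' := Rmax b (M + 1)).
  pose proof (Rmin_l a (d / 2)); pose proof (Rmin_r a (d / 2)).
  pose proof (Rmax_l b (M + 1)); pose proof (Rmax_r b (M + 1)).
  assert (Ha' : 0 < a') by (unfold a'; apply Rmin_glb_lt; lra).
  specialize (P a' b' Ha' ltac:(unfold a'; lra) ltac:(unfold b'; lra)).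
  pose proof (RInt_nonneg_le_wider a b a' b' Ha' ltac:(unfold a'; lra) Hab ltac:(unfold b'; lra)).
  apply Rabs_def2 in P; lra.
Qed.

(* The improper integral is the supremum of the partial integrals. *)
Lemma ImpInt0_of_bounded :
  (exists B, forall a b, 0 < a -> a <= b -> RInt f a b <= B) -> exists L, ImpInt0 f L.
Proof.
  intros [B HB].
  set (E := fun y => exists a b, 0 < a /\ a <= b /\ y = RInt f a b).
  assert (Hb : bound E) by (exists B; intros y [a [b [Ha [Hab ->]]]]; auto).
  assert (He : exists y, E y) by (exists (RInt f 1 1), 1, 1; repeat split; lra).
  destruct (completeness E Hb He) as [L [HL1 HL2]].
  exists L; split; [exact f_integrable|]; intros eps Heps.
  assert (Hex : exists a b, 0 < a /\ a <= b /\ L - eps < RInt f a b).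
  { apply NNPP; intro Hn.
    assert (Hub : is_upper_bound E (L - eps)).
    { intros y [a [b [Ha [Hab ->]]]]; apply Rnot_lt_le; intro; apply Hn; exists a, b; auto. }
    specialize (HL2 _ Hub); lra. }
  destruct Hex as [a0 [b0 [Ha0 [Hab0 Hl]]]].
  exists a0; split; auto; exists (Rmax b0 1); split; [pose proof (Rmax_r b0 1); lra|].
  intros a b Ha Had Hmb; pose proof (Rmax_l b0 1).
  assert (RInt f a0 b0 <= RInt f a b) by (apply RInt_nonneg_le_wider; lra).
  assert (RInt f a b <= L) by (apply HL1; exists a, b; repeat split; lra).
  apply Rabs_def1; lra.
Qed.

End NonnegativeIntegrand.

Lemma ImpInt0_le_of_partial (f : R -> R) (L u a0 B : R) : ImpInt0 f L -> 0 < a0 ->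
  (forall a b, 0 < a -> a <= a0 -> B <= b -> RInt f a b <= u) -> L <= u.
Proof.
  intros [_ Hlim] Ha0 Hpart; apply Rnot_lt_le; intro Hlt.
  destruct (Hlim (L - u) ltac:(lra)) as [d [Hd [M [HM P]]]].
  set (a := Rmin a0 (d / 2)); set (b := Rmax B (M + 1)).
  pose proof (Rmin_l a0 (d / 2)); pose proof (Rmin_r a0 (d / 2)).
  pose proof (Rmax_l B (M + 1)); pose proof (Rmax_r B (M + 1)).
  assert (Ha : 0 < a) by (unfold a; apply Rmin_glb_lt; lra).
  specialize (P a b Ha ltac:(unfold a; lra) ltac:(unfold b; lra)).
  specialize (Hpart a b Ha ltac:(unfold a; lra) ltac:(unfold b; lra)).
  apply Rabs_def2 in P; lra.
Qed.

(** * Growth of the Laplace exponent *)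

Lemma exp_le_compat (x y : R) : x <= y -> exp x <= exp y.
Proof. intros [H | ->]; [left; apply exp_increasing; exact H | lra]. Qed.

Lemma lt_exp (x : R) : x < exp x.
Proof. pose proof (exp_ineq1_le x); lra. Qed.

Lemma exp_neg_le_1 (x : R) : 0 <= x -> exp (- x) <= 1.
Proof. intros; rewrite <- exp_0; apply exp_le_compat; lra. Qed.

Lemma exp_neg_mul_lt (x m e : R) : 0 < e -> m <= x * e -> exp (- x) * m < e.
Proof.
  intros He Hm.
  assert (Hinv : exp (- x) * exp x = 1) by (rewrite <- exp_plus, Rplus_opp_l; apply exp_0).
  pose proof (lt_exp x); pose proof (exp_pos (- x)).
  assert (exp (- x) * m < exp (- x) * (exp x * e)) by (apply Rmult_lt_compat_l; nra).
  replace (exp (- x) * (exp x * e)) with (exp (- x) * exp x * e) in * by ring.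
  rewrite Hinv in *; lra.
Qed.

Section LaplaceExponent.
Variables (c s : R) (Pbar : R -> R).
Hypothesis Levy : LevyTriplet c s Pbar.

Lemma Pbar_nonneg (x : R) : 0 < x -> 0 <= Pbar x.
Proof. destruct Levy as (_ & H & _); auto. Qed.

Lemma Pbar_nonincreasing (a b : R) : 0 < a -> nonincreasing_on Pbar a b.
Proof. intros Ha x y Hx Hxy Hy; destruct Levy as (_ & _ & H & _); apply H; lra. Qed.

Lemma Pbar_integrable (a b : R) : 0 < a -> a <= b -> Riemann_integrable Pbar a b.
Proof. intros; apply nonincreasing_integrable, Pbar_nonincreasing; auto. Qed.

Definition jump_integrand (th x : R) : R := th * (1 - exp (- (th * x))) * Pbar x.

Lemma jump_integrand_integrable (th a b : R) : 0 < th -> 0 < a -> a <= b ->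
  Riemann_integrable (jump_integrand th) a b.
Proof.
  intros Hth Ha Hab.
  apply (Riemann_integrable_ext_on (fun x => Pbar x * (th * (1 - exp (- (th * x))))));
    [auto | intros; unfold jump_integrand; ring |].
  apply Riemann_integrable_mul_monotone; auto.
  - apply Pbar_nonincreasing; auto.
  - intros x y Hx Hxy Hy; apply Rmult_le_compat_l; [lra|].
    assert (exp (- (th * y)) <= exp (- (th * x))) by (apply exp_le_compat; nra); lra.
  - intros; apply Pbar_nonneg; lra.
  - intros x Hx; pose proof (exp_neg_le_1 (th * x) ltac:(nra)); nra.
Qed.

Lemma jump_integrand_nonneg (th x : R) : 0 < th -> 0 < x -> 0 <= jump_integrand th x.
Proof.
  intros Hth Hx; unfold jump_integrand; pose proof (Pbar_nonneg x Hx).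
  pose proof (exp_neg_le_1 (th * x) ltac:(nra)).
  apply Rmult_le_pos; [apply Rmult_le_pos|]; lra.
Qed.

(* 1 - e^{-th x} <= min(th x, 1) <= max(th, 1) min(x, 1) *)
Lemma jump_integrand_le (th x : R) : 0 < th -> 0 < x ->
  jump_integrand th x <= th * Rmax th 1 * (Rmin x 1 * Pbar x).
Proof.
  intros Hth Hx; unfold jump_integrand.
  assert (H1 : 1 - exp (- (th * x)) <= Rmax th 1 * Rmin x 1).
  { pose proof (exp_ineq1_le (- (th * x))); pose proof (exp_pos (- (th * x))).
    pose proof (Rmax_l th 1); pose proof (Rmax_r th 1).
    destruct (Rle_dec x 1); [rewrite Rmin_left by lra; nra | rewrite Rmin_right by lra; lra]. }
  pose proof (Pbar_nonneg x Hx).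
  replace (th * Rmax th 1 * (Rmin x 1 * Pbar x)) with (th * (Rmax th 1 * Rmin x 1) * Pbar x)
    by ring.
  apply Rmult_le_compat_r; [lra|]; apply Rmult_le_compat_l; lra.
Qed.

Lemma jump_integrand_ImpInt0 (th : R) : 0 < th -> exists J, ImpInt0 (jump_integrand th) J.
Proof.
  intros Hth; destruct Levy as (_ & _ & _ & _ & _ & [Lg HLg]).
  assert (Hg0 : forall x, 0 < x -> 0 <= Rmin x 1 * Pbar x).
  { intros; apply Rmult_le_pos; [apply Rmin_glb; lra | apply Pbar_nonneg; auto]. }
  assert (Hint : forall a b, 0 < a -> a <= b ->
                   inhabited (Riemann_integrable (jump_integrand th) a b))
    by (intros; constructor; apply jump_integrand_integrable; auto).
  apply ImpInt0_of_bounded; auto; [intros; apply jump_integrand_nonneg; auto|].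
  exists (th * Rmax th 1 * Lg); intros a b Ha Hab.
  destruct (proj1 HLg a b Ha Hab) as [pg].
  apply Rle_trans with (RInt (fun x => th * Rmax th 1 * (Rmin x 1 * Pbar x)) a b).
  - apply RInt_le; auto;
      [apply jump_integrand_integrable; auto | apply Riemann_integrable_scal_l; auto |].
    intros; apply jump_integrand_le; lra.
  - rewrite RInt_scal_l by auto; apply Rmult_le_compat_l.
    + pose proof (Rmax_r th 1); apply Rmult_le_pos; lra.
    + apply (ImpInt0_nonneg_partial_le _ (proj1 HLg) Hg0); auto.
Qed.

Lemma psiY_lower_bound (th a b : R) : 0 < th -> 0 < a -> a <= b ->
  c * th + s * th ^ 2 / 2 + th * (1 - exp (- (th * a))) * RInt Pbar a b <= psiY c s Pbar th.
Proof.
  intros Hth Ha Hab; unfold psiY.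
  destruct (jump_integrand_ImpInt0 th Hth) as [J HJ].
  change (fun x => th * (1 - exp (- (th * x))) * Pbar x) with (jump_integrand th).
  rewrite (ImpVal0_eq _ _ HJ).
  assert (th * (1 - exp (- (th * a))) * RInt Pbar a b <= RInt (jump_integrand th) a b).
  { rewrite <- RInt_scal_l by (apply Pbar_integrable; auto).
    apply RInt_le; auto.
    - apply Riemann_integrable_scal_l, Pbar_integrable; auto.
    - apply jump_integrand_integrable; auto.
    - intros x Hx; unfold jump_integrand; apply Rmult_le_compat_r; [apply Pbar_nonneg; lra|].
      apply Rmult_le_compat_l; [lra|].
      assert (exp (- (th * x)) <= exp (- (th * a))) by (apply exp_le_compat; nra); lra. }
  assert (RInt (jump_integrand th) a b <= J).
  { apply (ImpInt0_nonneg_partial_le (jump_integrand th)); auto.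
    - intros; constructor; apply jump_integrand_integrable; auto.
    - intros; apply jump_integrand_nonneg; auto. }
  lra.
Qed.

Hypothesis not_subordinator : NotSubordinator c s Pbar.

(* Without a Gaussian part, non-subordination says that the Levy mass int Pbar
   (possibly infinite) beats the drift -c. *)
Lemma Pbar_mass_exceeds_drift : s = 0 -> exists a b, 0 < a /\ a <= b /\ 0 < c + RInt Pbar a b.
Proof.
  intros Hs.
  destruct (classic (exists B, forall a b, 0 < a -> a <= b -> RInt Pbar a b <= B)) as [HB|HB].
  - destruct (ImpInt0_of_bounded Pbar) as [L [_ Hlim]]; auto.
    + intros; constructor; apply Pbar_integrable; auto.
    + exact Pbar_nonneg.
    + assert (HcL : 0 < c + L).
      { apply Rnot_le_lt; intro Hle; apply not_subordinator; split; auto.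
        exists L; split; auto; split; [|exact Hlim].
        intros; constructor; apply Pbar_integrable; auto. }
      destruct (Hlim ((c + L) / 2) ltac:(lra)) as [d [Hd [M [HM P]]]].
      exists (d / 2), (Rmax (M + 1) (d / 2)).
      pose proof (Rmax_l (M + 1) (d / 2)); pose proof (Rmax_r (M + 1) (d / 2)).
      specialize (P (d / 2) (Rmax (M + 1) (d / 2)) ltac:(lra) ltac:(lra) ltac:(lra)).
      apply Rabs_def2 in P; repeat split; lra.
  - apply NNPP; intro Hn; apply HB; exists (- c); intros a b Ha Hab.
    apply Rnot_lt_le; intro; apply Hn; exists a, b; repeat split; auto; lra.
Qed.

Lemma psiY_linear_lower_bound :
  exists eta T, 0 < eta /\ forall th, T < th -> eta * th <= psiY c s Pbar th.
Proof.
  assert (Hs0 : 0 <= s) by (destruct Levy; auto).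
  destruct (Req_dec s 0) as [Hs|Hs].
  - destruct (Pbar_mass_exceeds_drift Hs) as [a [b [Ha [Hab Hm]]]].
    set (P := RInt Pbar a b); set (eta := c + P); fold P in Hm.
    assert (HP : 0 <= P).
    { apply RInt_nonneg; auto; [apply Pbar_integrable; auto | intros; apply Pbar_nonneg; lra]. }
    exists (eta / 2), (Rmax 0 (2 * P / (a * eta))); split; [unfold eta; lra|].
    intros th Hth.
    pose proof (Rmax_l 0 (2 * P / (a * eta))); pose proof (Rmax_r 0 (2 * P / (a * eta))).
    pose proof (psiY_lower_bound th a b ltac:(lra) Ha Hab) as Hpsi; fold P in Hpsi.
    assert (Htail : exp (- (th * a)) * P < eta / 2).
    { apply exp_neg_mul_lt; [unfold eta; lra|].
      assert (2 * P / (a * eta) * (a * eta) <= th * (a * eta))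
        by (apply Rmult_le_compat_r; [unfold eta; nra | lra]).
      replace (2 * P / (a * eta) * (a * eta)) with (2 * P) in * by (field; unfold eta; lra).
      lra. }
    rewrite Hs in Hpsi |- *.
    replace (c * th + 0 * th ^ 2 / 2 + th * (1 - exp (- (th * a))) * P)
      with (th * (eta - exp (- (th * a)) * P)) in Hpsi by (unfold eta; field).
    assert (th * (eta / 2) <= th * (eta - exp (- (th * a)) * P)) by (apply Rmult_le_compat_l; lra).
    lra.
  - exists 1, (Rmax 0 (2 * (1 - c) / s)); split; [lra|].
    intros th Hth; pose proof (Rmax_l 0 (2 * (1 - c) / s)); pose proof (Rmax_r 0 (2 * (1 - c) / s)).
    pose proof (psiY_lower_bound th 1 1 ltac:(lra) ltac:(lra) ltac:(lra)) as Hpsi.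
    rewrite RInt_point in Hpsi.
    assert (2 * (1 - c) / s * s <= th * s) by (apply Rmult_le_compat_r; lra).
    replace (2 * (1 - c) / s * s) with (2 * (1 - c)) in * by (field; lra).
    nra.
Qed.

End LaplaceExponent.

Lemma frequently_ge_of_linear_lower_bound (f : R -> R) :
  (exists eta T, 0 < eta /\ forall th, T < th -> eta * th <= f th) ->
  forall m T', exists th, T' < th /\ m <= f th.
Proof.
  intros [eta [T [Heta Hf]]] m T'.
  set (th := Rmax (Rmax T T') (Rabs m / eta) + 1).
  pose proof (Rmax_l (Rmax T T') (Rabs m / eta)); pose proof (Rmax_r (Rmax T T') (Rabs m / eta)).
  pose proof (Rmax_l T T'); pose proof (Rmax_r T T').
  exists th; split; [unfold th; lra|].
  specialize (Hf th ltac:(unfold th; lra)).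
  assert (Rabs m / eta * eta <= th * eta) by (apply Rmult_le_compat_r; unfold th; lra).
  replace (Rabs m / eta * eta) with (Rabs m) in * by (field; lra).
  pose proof (Rle_abs m); lra.
Qed.

(** * Scale functions are nonnegative *)

Lemma laplace_shift_partial_le (f : R -> R) (th L w : R) :
  0 < th -> 0 <= w -> (forall x, 0 < x -> - w <= f x) ->
  ImpInt0 (fun x => exp (- (th * x)) * f x) L ->
  forall a b, 0 < a -> a <= b ->
  RInt (fun x => exp (- (th * x)) * (f x + w)) a b <= L + 1 + w / th.
Proof.
  intros Hth Hw Hf [Hint Hlim] a b Ha Hab.
  set (g := fun x => exp (- (th * x)) * (f x + w)).
  assert (Hg : forall a b, 0 < a -> a <= b ->
            RInt g a b = RInt (fun x => exp (- (th * x)) * f x) a b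
                         + w * RInt (fun x => exp (- (th * x))) a b
            /\ inhabited (Riemann_integrable g a b)).
  { intros a0 b0 Ha0 Hab0; destruct (Hint a0 b0 Ha0 Hab0) as [p].
    pose proof (exp_neg_integrable th a0 b0 Hth) as pe.
    split; [|constructor].
    - rewrite <- RInt_lin by auto; apply RInt_ext_on; auto; intros; unfold g; ring.
    - apply (Riemann_integrable_ext_on
               (fun x => exp (- (th * x)) * f x + w * exp (- (th * x))));
        [auto | intros; unfold g; ring | apply RiemannInt_P10; auto]. }
  destruct (Hlim 1 ltac:(lra)) as [d [Hd [M [HM P]]]].
  set (a' := Rmin a (d / 2)); set (b' := Rmax b (M + 1)).
  pose proof (Rmin_l a (d / 2)); pose proof (Rmin_r a (d / 2)).
  pose proof (Rmax_l b (M + 1)); pose proof (Rmax_r b (M + 1)).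
  assert (Ha' : 0 < a') by (unfold a'; apply Rmin_glb_lt; lra).
  assert (Hwide : RInt g a b <= RInt g a' b').
  { apply RInt_nonneg_le_wider; unfold a', b' in *; try lra.
    - intros; apply Hg; auto.
    - intros x Hx; unfold g; pose proof (exp_pos (- (th * x))); pose proof (Hf x Hx); nra. }
  destruct (Hg a' b' Ha' ltac:(unfold a', b'; lra)) as [E _].
  rewrite E, RInt_exp_neg in Hwide by auto.
  specialize (P a' b' Ha' ltac:(unfold a'; lra) ltac:(unfold b'; lra)); apply Rabs_def2 in P.
  assert (Hexp : (exp (- (th * a')) - exp (- (th * b'))) / th <= 1 / th).
  { unfold Rdiv; apply Rmult_le_compat_r; [left; apply Rinv_0_lt_compat; lra|].
    pose proof (exp_neg_le_1 (th * a') ltac:(nra)); pose proof (exp_pos (- (th * b'))); lra. }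
  apply (Rmult_le_compat_l w) in Hexp; auto.
  unfold Rdiv in *; lra.
Qed.

Section NegativeAtZero.
Variables (W : R -> R) (w eps th1 K th : R).
Hypotheses (w_pos : 0 < w) (eps_pos : 0 < eps) (th1_pos : 0 < th1) (th1_le : th1 <= th).
Hypothesis W_nondecreasing : forall x y, 0 <= x -> x <= y -> W x <= W y.
Hypothesis W_0 : W 0 = - w.
Hypothesis W_near_0 : forall x, 0 <= x <= eps -> W x <= - w / 2.
Hypothesis shifted_tail_le :
  forall b, eps <= b -> RInt (fun x => exp (- (th1 * x)) * (W x + w)) eps b <= K.
Hypothesis K_small : K * exp (th1 * eps) <= w * eps / 16 * exp (th * eps / 2).

Lemma W_ge (x : R) : 0 <= x -> - w <= W x.
Proof. intros; rewrite <- W_0; apply W_nondecreasing; lra. Qed.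

Lemma shifted_laplace_integrable (t a b : R) : 0 < t -> 0 <= a -> a <= b ->
  Riemann_integrable (fun x => exp (- (t * x)) * (W x + w)) a b.
Proof.
  intros Ht Ha Hab; apply Riemann_integrable_mul_monotone; auto.
  - intros x y Hx Hxy Hy; apply exp_le_compat; nra.
  - intros x y Hx Hxy Hy; pose proof (W_nondecreasing x y ltac:(lra) Hxy); lra.
  - intros; left; apply exp_pos.
  - intros; pose proof (W_ge x ltac:(lra)); lra.
Qed.

Lemma laplace_integrable (t a b : R) : 0 < t -> 0 <= a -> a <= b ->
  Riemann_integrable (fun x => exp (- (t * x)) * W x) a b.
Proof.
  intros Ht Ha Hab.
  apply (Riemann_integrable_ext_on
           (fun x => exp (- (t * x)) * (W x + w) + (- w) * exp (- (t * x))));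
    [auto | intros; ring |].
  apply RiemannInt_P10; [apply shifted_laplace_integrable | apply exp_neg_integrable]; auto.
Qed.

Let f x := exp (- (th * x)) * W x.

Lemma laplace_head_le (a : R) : 0 < a -> a <= eps / 4 ->
  RInt f a eps <= - (w * eps / 8) * exp (- (th * eps / 2)).
Proof.
  intros Ha Ha4.
  pose proof (laplace_integrable th a (eps / 2) ltac:(lra) ltac:(lra) ltac:(lra)) as p1.
  pose proof (laplace_integrable th (eps / 2) eps ltac:(lra) ltac:(lra) ltac:(lra)) as p2.
  rewrite <- (RInt_Chasles f a (eps / 2) eps p1 p2).
  pose proof (exp_pos (- (th * eps / 2))).
  assert (I1 : RInt f a (eps / 2) <= - (w / 2) * exp (- (th * eps / 2)) * (eps / 2 - a)).
  { apply RInt_upper_bound; auto; [lra|]; intros x Hx; unfold f.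
    assert (exp (- (th * eps / 2)) <= exp (- (th * x))) by (apply exp_le_compat; nra).
    pose proof (W_near_0 x ltac:(lra)); nra. }
  assert (I2 : RInt f (eps / 2) eps <= 0 * (eps - eps / 2)).
  { apply RInt_upper_bound; auto; [lra|]; intros x Hx; unfold f.
    pose proof (W_near_0 x ltac:(lra)); pose proof (exp_pos (- (th * x))); nra. }
  assert (0 <= w * exp (- (th * eps / 2)) * (eps / 4 - a)) by (apply Rmult_le_pos; nra).
  nra.
Qed.

(* For x >= eps: e^{-th x} W x <= e^{-(th - th1) eps} e^{-th1 x} (W x + w). *)
Lemma laplace_tail_le (b : R) : eps <= b -> RInt f eps b <= exp (- ((th - th1) * eps)) * K.
Proof.
  intros Hb.
  set (k := exp (- ((th - th1) * eps))).
  assert (Hk : 0 < k) by apply exp_pos.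
  apply Rle_trans with (RInt (fun x => k * (exp (- (th1 * x)) * (W x + w))) eps b).
  - apply RInt_le; auto; [apply laplace_integrable; lra|
      apply Riemann_integrable_scal_l, shifted_laplace_integrable; lra|].
    intros x Hx; unfold f.
    assert (E : exp (- (th * x)) = exp (- ((th - th1) * x)) * exp (- (th1 * x)))
      by (rewrite <- exp_plus; f_equal; ring).
    assert (exp (- ((th - th1) * x)) <= k) by (apply exp_le_compat; nra).
    pose proof (exp_pos (- (th1 * x))); pose proof (exp_pos (- ((th - th1) * x))).
    pose proof (W_ge x ltac:(lra)).
    rewrite E.
    assert (exp (- ((th - th1) * x)) * exp (- (th1 * x)) * W x
            <= exp (- ((th - th1) * x)) * exp (- (th1 * x)) * (W x + w))
      by (apply Rmult_le_compat_l; [apply Rmult_le_pos|]; lra).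
    assert (exp (- ((th - th1) * x)) * (exp (- (th1 * x)) * (W x + w))
            <= k * (exp (- (th1 * x)) * (W x + w))) by (apply Rmult_le_compat_r; nra).
    nra.
  - rewrite RInt_scal_l by (apply shifted_laplace_integrable; lra).
    apply Rmult_le_compat_l; [lra | apply shifted_tail_le; lra].
Qed.

Lemma laplace_partial_negative (a b : R) : 0 < a -> a <= eps / 4 -> eps <= b ->
  RInt f a b <= - (w * eps / 16) * exp (- (th * eps / 2)).
Proof.
  intros Ha Ha4 Hb.
  rewrite <- (RInt_Chasles f a eps b) by (apply laplace_integrable; lra).
  pose proof (laplace_head_le a Ha Ha4); pose proof (laplace_tail_le b Hb).
  assert (E : exp (- ((th - th1) * eps))
              = exp (th1 * eps) * exp (- (th * eps / 2)) * exp (- (th * eps / 2)))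
    by (rewrite <- !exp_plus; f_equal; field).
  assert (exp (- ((th - th1) * eps)) * K <= w * eps / 16 * exp (- (th * eps / 2))).
  { rewrite E.
    assert (Hinv : exp (th * eps / 2) * exp (- (th * eps / 2)) = 1)
      by (rewrite <- exp_plus, Rplus_opp_r; apply exp_0).
    pose proof (exp_pos (- (th * eps / 2))).
    apply (Rmult_le_compat_r (exp (- (th * eps / 2)) * exp (- (th * eps / 2)))) in K_small; [|nra].
    replace (w * eps / 16 * exp (th * eps / 2) * (exp (- (th * eps / 2)) * exp (- (th * eps / 2))))
      with (w * eps / 16 * (exp (th * eps / 2) * exp (- (th * eps / 2))) * exp (- (th * eps / 2)))
      in K_small by ring.
    rewrite Hinv in K_small; lra. }
  lra.
Qed.

End NegativeAtZero.

Lemma le_exp_of_ln_le (C x : R) : ln (Rmax 1 C) <= x -> C <= exp x.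
Proof.
  intros Hx; apply exp_le_compat in Hx; rewrite exp_ln in Hx by (pose proof (Rmax_l 1 C); lra).
  pose proof (Rmax_r 1 C); lra.
Qed.

Lemma le_exp_half_mul (C e th : R) : 0 < e -> 2 / e * ln (Rmax 1 C) <= th ->
  C <= exp (th * e / 2).
Proof.
  intros He Hth; apply le_exp_of_ln_le.
  apply (Rmult_le_compat_r (e / 2)) in Hth; [|lra].
  replace (2 / e * ln (Rmax 1 C) * (e / 2)) with (ln (Rmax 1 C)) in Hth by (field; lra).
  lra.
Qed.

(* Right-continuity at 0 keeps W <= W(0)/2 on some [0, eps]; for large th the Laplace
   integrand is then dominated by this negative part. *)
Lemma laplace_eventually_negative (W : R -> R) (th1 L1 : R) :
  (forall x y, 0 <= x -> x <= y -> W x <= W y) -> W 0 < 0 ->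
  (forall e, 0 < e -> exists d, 0 < d /\
     forall y, 0 <= y -> Rabs (y - 0) < d -> Rabs (W y - W 0) < e) ->
  0 < th1 -> ImpInt0 (fun x => exp (- (th1 * x)) * W x) L1 ->
  exists T, forall th L, T < th -> ImpInt0 (fun x => exp (- (th * x)) * W x) L -> L < 0.
Proof.
  intros Hmono HW0 Hcont Hth1 HL1; set (w := - W 0).
  assert (Hw : 0 < w) by (unfold w; lra).
  destruct (Hcont (w / 2) ltac:(lra)) as [d [Hd Hnear]].
  set (eps := d / 2).
  assert (Heps : 0 < eps) by (unfold eps; lra).
  assert (Hnear0 : forall x, 0 <= x <= eps -> W x <= - w / 2).
  { intros x Hx.
    specialize (Hnear x ltac:(lra) ltac:(rewrite Rminus_0_r, Rabs_right; unfold eps in *; lra)).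
    apply Rabs_def2 in Hnear; unfold w in *; lra. }
  set (K := Rmax 0 (L1 + 1 + w / th1)).
  assert (Htail : forall b, eps <= b ->
            RInt (fun x => exp (- (th1 * x)) * (W x + w)) eps b <= K).
  { intros b Hb; eapply Rle_trans; [|apply Rmax_r].
    apply (laplace_shift_partial_le W); try lra; auto.
    intros x Hx; unfold w; rewrite Ropp_involutive; apply Hmono; lra. }
  set (C := 16 * K * exp (th1 * eps) / (w * eps)).
  exists (Rmax th1 (2 / eps * ln (Rmax 1 C))); intros th L Hth HL.
  pose proof (Rmax_l th1 (2 / eps * ln (Rmax 1 C))).
  pose proof (Rmax_r th1 (2 / eps * ln (Rmax 1 C))).
  assert (Hsmall : K * exp (th1 * eps) <= w * eps / 16 * exp (th * eps / 2)).
  { assert (HC : C <= exp (th * eps / 2)) by (apply le_exp_half_mul; lra).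
    apply (Rmult_le_compat_r (w * eps / 16)) in HC; [|nra].
    unfold C in HC.
    replace (16 * K * exp (th1 * eps) / (w * eps) * (w * eps / 16)) with (K * exp (th1 * eps))
      in HC by (field; lra).
    lra. }
  assert (Hneg : L <= - (w * eps / 16) * exp (- (th * eps / 2))).
  { apply (ImpInt0_le_of_partial _ _ _ (eps / 4) eps HL); [lra|].
    intros a b Ha Ha4 Hb.
    apply (laplace_partial_negative W w eps th1 K th); auto; try lra; unfold w; ring. }
  pose proof (exp_pos (- (th * eps / 2))).
  assert (0 < w * eps / 16 * exp (- (th * eps / 2))) by (apply Rmult_lt_0_compat; nra).
  lra.
Qed.

Lemma ScaleFun_nonneg_at_0 (psi : R -> R) (q : R) (W : R -> R) :
  ScaleFun psi q W -> (forall T, exists th, T < th /\ q <= psi th) -> 0 <= W 0.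
Proof.
  intros [_ [Hcont [Hinc [th0 Hlap]]]] Hpsi; apply Rnot_lt_le; intro HW0.
  set (th1 := Rmax th0 0 + 1).
  assert (Hth1 : th0 < th1 /\ 0 < th1)
    by (unfold th1; pose proof (Rmax_l th0 0); pose proof (Rmax_r th0 0); lra).
  destruct (laplace_eventually_negative W th1 _
              ltac:(intros x y Hx [Hxy | <-]; [left; apply Hinc; auto | lra])
              HW0 (Hcont 0 (Rle_refl 0)) ltac:(lra) (Hlap th1 ltac:(lra))) as [T HT].
  destruct (Hpsi (Rmax T th1)) as [th [Hth Hq]].
  pose proof (Rmax_l T th1); pose proof (Rmax_r T th1).
  pose proof (HT th _ ltac:(lra) (Hlap th ltac:(lra))) as Hneg.
  (* 1 / 0 = 0 in Rocq, so the case psi th = q is harmless. *)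
  destruct (Req_dec (psi th) q) as [E|Hne].
  - rewrite E, Rminus_diag in Hneg; unfold Rdiv in Hneg; rewrite Rinv_0 in Hneg; lra.
  - assert (0 < 1 / (psi th - q)) by (apply Rdiv_lt_0_compat; lra); lra.
Qed.

Lemma ScaleFun_nonneg (psi : R -> R) (q : R) (W : R -> R) :
  ScaleFun psi q W -> (forall T, exists th, T < th /\ q <= psi th) ->
  forall x, 0 <= x -> 0 <= W x.
Proof.
  intros HW Hpsi x [Hx | <-]; [|exact (ScaleFun_nonneg_at_0 psi q W HW Hpsi)].
  pose proof (ScaleFun_nonneg_at_0 psi q W HW Hpsi).
  destruct HW as (_ & _ & Hinc & _); pose proof (Hinc 0 x (Rle_refl 0) Hx); lra.
Qed.

(** * Monotonicity of Gamma in its first argument *)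

Section ZFunctions.
Variables (W : R -> R) (q : R).
Hypothesis q_pos : 0 < q.
Hypothesis W_nonneg : forall x, 0 <= x -> 0 <= W x.
Hypothesis W_increasing : forall x y, 0 <= x -> x < y -> W x < W y.

Lemma W_nondecreasing_on (a b : R) : 0 <= a -> nondecreasing_on W a b.
Proof. intros Ha x y Hx [Hxy | <-] Hy; [left; apply W_increasing; lra | lra]. Qed.

Lemma W_integrable (a b : R) : 0 <= a -> a <= b -> Riemann_integrable W a b.
Proof. intros; apply nondecreasing_integrable, W_nondecreasing_on; auto. Qed.

Lemma Zq_sub (x y : R) : 0 <= x -> x <= y -> Zq W q y - Zq W q x = q * RInt W x y.
Proof.
  intros Hx Hxy; unfold Zq; rewrite <- (RInt_Chasles W 0 x y) by (apply W_integrable; lra).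
  ring.
Qed.

Lemma Zq_0 : Zq W q 0 = 1.
Proof. unfold Zq; rewrite RInt_point; ring. Qed.

Lemma Zq_le (x y : R) : 0 <= x -> x <= y -> Zq W q x <= Zq W q y.
Proof.
  intros Hx Hxy; pose proof (Zq_sub x y Hx Hxy).
  assert (0 <= RInt W x y)
    by (apply RInt_nonneg; auto; [apply W_integrable; lra | intros; apply W_nonneg; lra]).
  nra.
Qed.

Lemma Zq_ge_1 (x : R) : 0 <= x -> 1 <= Zq W q x.
Proof. intros; rewrite <- Zq_0; apply Zq_le; lra. Qed.

Lemma Zq_gt_1 (x : R) : 0 < x -> 1 < Zq W q x.
Proof.
  intros Hx; pose proof (Zq_sub 0 x ltac:(lra) ltac:(lra)) as E; rewrite Zq_0 in E.
  rewrite <- (RInt_Chasles W 0 (x / 2) x) in E by (apply W_integrable; lra).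
  assert (0 <= RInt W 0 (x / 2))
    by (apply RInt_nonneg; [lra | apply W_integrable; lra | intros; apply W_nonneg; lra]).
  assert (W (x / 2) * (x - x / 2) <= RInt W (x / 2) x)
    by (apply RInt_lower_bound; [lra | apply W_integrable; lra |];
        intros y Hy; left; apply W_increasing; lra).
  assert (0 < W (x / 2))
    by (pose proof (W_increasing 0 (x / 2) ltac:(lra) ltac:(lra));
        pose proof (W_nonneg 0 (Rle_refl 0)); lra).
  assert (0 < q * (W (x / 2) * (x - x / 2))) by (apply Rmult_lt_0_compat; nra).
  nra.
Qed.

Lemma Zq_sub_le (x y K : R) : 0 <= x -> x <= y -> y <= K ->
  Zq W q y - Zq W q x <= q * W K * (y - x).
Proof.
  intros Hx Hxy HyK; rewrite Zq_sub, Rmult_assoc by lra.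
  apply Rmult_le_compat_l; [lra|]; apply RInt_upper_bound; [lra | apply W_integrable; lra |].
  intros z Hz; apply (W_nondecreasing_on 0 K); lra.
Qed.

Lemma Zq_continuous (x : R) : 0 <= x -> forall e, 0 < e -> exists d, 0 < d /\
  forall y, 0 <= y -> Rabs (y - x) < d -> Rabs (Zq W q y - Zq W q x) < e.
Proof.
  intros Hx e He.
  set (C := q * W (x + 1) + 1).
  assert (HW1 : 0 <= W (x + 1)) by (apply W_nonneg; lra).
  assert (HC : 0 < C) by (unfold C; nra).
  exists (Rmin 1 (e / C)); split; [apply Rmin_glb_lt; [lra | apply Rdiv_lt_0_compat; lra]|].
  intros y Hy Hd; pose proof (Rmin_l 1 (e / C)); pose proof (Rmin_r 1 (e / C)).
  assert (Hb : Rabs (y - x) * C < e).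
  { apply Rlt_le_trans with (e / C * C); [apply Rmult_lt_compat_r; lra | right; field; lra]. }
  apply Rabs_def2 in Hd.
  destruct (Rle_dec x y).
  - pose proof (Zq_sub_le x y (x + 1) Hx r ltac:(lra)); pose proof (Zq_le x y Hx r).
    rewrite Rabs_right by lra; rewrite Rabs_right in Hb by lra; unfold C in Hb; nra.
  - pose proof (Zq_sub_le y x (x + 1) Hy ltac:(lra) ltac:(lra)).
    pose proof (Zq_le y x Hy ltac:(lra)).
    rewrite Rabs_left1 by lra; rewrite Rabs_left1 in Hb by lra; unfold C in Hb; nra.
Qed.

Lemma Zq_integrable (a b : R) : 0 <= a -> a <= b -> Riemann_integrable (Zq W q) a b.
Proof. intros; apply nondecreasing_integrable; auto; intros x y ? ? ?; apply Zq_le; lra. Qed.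

Lemma Zbarq_0 : Zbarq W q 0 = 0.
Proof. apply RInt_point. Qed.

Lemma Zbarq_ge (b : R) : 0 <= b -> b <= Zbarq W q b.
Proof.
  intros Hb; unfold Zbarq; replace b with (1 * (b - 0)) at 1 by ring.
  apply RInt_lower_bound; auto; [apply Zq_integrable; lra | intros; apply Zq_ge_1; lra].
Qed.

Lemma Zbarq_le (b : R) : 0 <= b -> Zbarq W q b <= b * Zq W q b.
Proof.
  intros Hb; unfold Zbarq; replace (b * Zq W q b) with (Zq W q b * (b - 0)) by ring.
  apply RInt_upper_bound; auto; [apply Zq_integrable; lra | intros; apply Zq_le; lra].
Qed.

End ZFunctions.

Lemma same_side_of_1 (u v : R) : Rabs (v - u) < Rabs (1 - u) ->
  (u < 1 -> v < 1) /\ (1 < u -> 1 < v).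
Proof.
  intros H; split; intros Hu.
  - rewrite (Rabs_right (1 - u)) in H by lra; apply Rabs_def2 in H; lra.
  - rewrite (Rabs_left (1 - u)) in H by lra; apply Rabs_def2 in H; lra.
Qed.

Section GammaMonotone.
Variables (WW W : R -> R) (q delta rho dX beta : R).
Hypotheses (q_pos : 0 < q) (delta_pos : 0 < delta) (beta_nonneg : 0 <= beta).
Hypothesis W_nonneg : forall x, 0 <= x -> 0 <= W x.
Hypothesis W_increasing : forall x y, 0 <= x -> x < y -> W x < W y.
Hypothesis WW_nonneg : forall x, 0 <= x -> 0 <= WW x.
Hypothesis WW_increasing : forall x y, 0 <= x -> x < y -> WW x < WW y.

Notation Gm := (Gamma WW W q delta rho dX beta).
Notation Z := (Zq W q).

Lemma Gamma_0_b (b : R) : Gm 0 b = delta - q * rho - beta * dX - q * beta * Zbarq W q b.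
Proof.
  unfold Gamma, rtilde, Rq; rewrite Zq_0, Rminus_0_r, RInt_point; field; lra.
Qed.

Lemma rtilde_integrand_integrable (a b : R) : 0 <= a -> a <= b ->
  Riemann_integrable (fun y => WW (b - y) * Z y) (b - a) b.
Proof.
  intros Ha Hab; apply Riemann_integrable_mul_monotone; try lra.
  - intros x y Hx Hxy Hy; apply (W_nondecreasing_on WW WW_increasing 0 b); lra.
  - intros x y Hx Hxy Hy; apply Zq_le; auto; lra.
  - intros; apply WW_nonneg; lra.
  - intros; pose proof (Zq_ge_1 W q q_pos W_nonneg W_increasing x ltac:(lra)); lra.
Qed.

Lemma Z_reflected_integrable (a1 a2 b : R) : 0 <= a1 -> a1 <= a2 -> a2 <= b ->
  Riemann_integrable (fun t => WW t * Z (b - t)) a1 a2.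
Proof.
  intros H1 H2 H3.
  apply (Riemann_integrable_ext_on (fun t => WW (b - (b - t)) * Z (b - t)));
    [auto | intros; replace (b - (b - x)) with x by ring; reflexivity |].
  apply (Riemann_integrable_reflect (fun y => WW (b - y) * Z y)).
  apply (Riemann_integrable_subinterval _ (b - a2) b); try lra.
  apply rtilde_integrand_integrable; lra.
Qed.

Lemma Gamma_weight_integrable (a1 a2 b : R) : 0 <= a1 -> a1 <= a2 -> a2 <= b ->
  Riemann_integrable (fun t => WW t * (1 - beta * Z (b - t))) a1 a2.
Proof.
  intros.
  apply (Riemann_integrable_ext_on (fun t => WW t + (- beta) * (WW t * Z (b - t))));
    [auto | intros; ring |].
  apply RiemannInt_P10; [apply W_integrable | apply Z_reflected_integrable]; auto.
Qed.

(* Substituting t = b - y in the convolution term of rtilde. *)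
Lemma Gamma_sub (a1 a2 b : R) : 0 <= a1 -> a1 <= a2 -> a2 <= b ->
  Gm a2 b - Gm a1 b = delta * q * RInt (fun t => WW t * (1 - beta * Z (b - t))) a1 a2.
Proof.
  intros H1 H2 H3.
  set (h := fun y => WW (b - y) * Z y).
  assert (Ph : Riemann_integrable h (b - a2) b) by (apply rtilde_integrand_integrable; lra).
  assert (E1 : Zq WW q a2 - Zq WW q a1 = q * RInt WW a1 a2) by (apply Zq_sub; auto).
  assert (Psub : forall c d, b - a2 <= c -> c <= d -> d <= b -> Riemann_integrable h c d)
    by (intros; apply (Riemann_integrable_subinterval _ (b - a2) b); auto).
  assert (E2 : RInt h (b - a2) b - RInt h (b - a1) b = RInt (fun t => WW t * Z (b - t)) a1 a2).
  { rewrite <- (RInt_Chasles h (b - a2) (b - a1) b) by (apply Psub; lra).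
    rewrite <- (RInt_reflect h b a1 a2) by (apply Psub; lra).
    assert (RInt (fun t => h (b - t)) a1 a2 = RInt (fun t => WW t * Z (b - t)) a1 a2).
    { apply RInt_ext_on; auto; intros x _; unfold h.
      replace (b - (b - x)) with x by ring; reflexivity. }
    lra. }
  assert (E3 : RInt (fun t => WW t * (1 - beta * Z (b - t))) a1 a2
               = RInt WW a1 a2 + (- beta) * RInt (fun t => WW t * Z (b - t)) a1 a2).
  { rewrite <- RInt_lin; [apply RInt_ext_on; auto; intros; ring | |].
    - apply (W_integrable WW WW_increasing); auto.
    - apply Z_reflected_integrable; auto. }
  unfold Gamma, rtilde; fold h.
  replace (b - (b - a2)) with a2 by ring; replace (b - (b - a1)) with a1 by ring.
  rewrite E3.
  replace (delta * Zq WW q a2 - q * rho - q * beta * (Rq W q dX b + delta * RInt h (b - a2) b) -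
           (delta * Zq WW q a1 - q * rho - q * beta * (Rq W q dX b + delta * RInt h (b - a1) b)))
    with (delta * (Zq WW q a2 - Zq WW q a1)
          - q * beta * delta * (RInt h (b - a2) b - RInt h (b - a1) b))
    by ring.
  rewrite E1, E2; ring.
Qed.

Lemma Z_reflected_le (b t t' : R) : t <= t' -> t' <= b -> Z (b - t') <= Z (b - t).
Proof. intros; apply Zq_le; auto; lra. Qed.

Lemma Gamma_nondecreasing_a (a1 a2 b : R) : 0 <= a1 -> a1 <= a2 -> a2 <= b ->
  beta * Z (b - a1) <= 1 -> Gm a1 b <= Gm a2 b.
Proof.
  intros H1 H2 H3 H4; pose proof (Gamma_sub a1 a2 b H1 H2 H3).
  assert (0 <= RInt (fun t => WW t * (1 - beta * Z (b - t))) a1 a2).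
  { apply RInt_nonneg; auto; [apply Gamma_weight_integrable; auto|].
    intros t Ht; pose proof (Z_reflected_le b a1 t ltac:(lra) ltac:(lra)).
    apply Rmult_le_pos; [apply WW_nonneg; lra | nra]. }
  assert (0 <= delta * q) by nra.
  nra.
Qed.

Lemma WW_pos (x : R) : 0 < x -> 0 < WW x.
Proof.
  intros; pose proof (WW_increasing 0 x ltac:(lra) ltac:(lra)).
  pose proof (WW_nonneg 0 (Rle_refl 0)); lra.
Qed.

Lemma Gamma_increasing_a (a1 a2 b : R) : 0 <= a1 -> a1 < a2 -> a2 <= b ->
  beta * Z (b - a1) < 1 -> Gm a1 b < Gm a2 b.
Proof.
  intros H1 H2 H3 H4; pose proof (Gamma_sub a1 a2 b H1 ltac:(lra) H3).
  assert (0 < RInt (fun t => WW t * (1 - beta * Z (b - t))) a1 a2).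
  { apply (RInt_mul_pos WW _ a1 a2 (1 - beta * Z (b - a1))); try lra.
    - apply Gamma_weight_integrable; lra.
    - intros; apply WW_nonneg; lra.
    - apply (W_nondecreasing_on WW WW_increasing); lra.
    - apply WW_pos; lra.
    - intros t Ht; pose proof (Z_reflected_le b a1 t ltac:(lra) ltac:(lra)); nra. }
  assert (0 < delta * q) by nra.
  nra.
Qed.

Lemma Gamma_decreasing_a (a1 a2 b : R) : 0 <= a1 -> a1 < a2 -> a2 <= b ->
  1 < beta * Z (b - a2) -> Gm a2 b < Gm a1 b.
Proof.
  intros H1 H2 H3 H4; pose proof (Gamma_sub a1 a2 b H1 ltac:(lra) H3).
  assert (Hint : Riemann_integrable (fun t => WW t * (beta * Z (b - t) - 1)) a1 a2).
  { apply (Riemann_integrable_ext_on (fun t => -1 * (WW t * (1 - beta * Z (b - t)))));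
      [lra | intros; ring |].
    apply Riemann_integrable_scal_l, Gamma_weight_integrable; lra. }
  assert (E : RInt (fun t => WW t * (1 - beta * Z (b - t))) a1 a2
              = -1 * RInt (fun t => WW t * (beta * Z (b - t) - 1)) a1 a2).
  { rewrite <- RInt_scal_l by exact Hint; apply RInt_ext_on; [lra | intros; ring]. }
  assert (0 < RInt (fun t => WW t * (beta * Z (b - t) - 1)) a1 a2).
  { apply (RInt_mul_pos WW _ a1 a2 (beta * Z (b - a2) - 1)); try lra; auto.
    - intros; apply WW_nonneg; lra.
    - apply (W_nondecreasing_on WW WW_increasing); lra.
    - apply WW_pos; lra.
    - intros t Ht; pose proof (Z_reflected_le b t a2 ltac:(lra) ltac:(lra)); nra. }
  assert (0 < delta * q) by nra.
  nra.
Qed.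

Lemma scaled_Z_near (y : R) : 0 < beta -> 0 <= y -> beta * Z y <> 1 ->
  exists d, 0 < d /\ forall y', 0 <= y' -> Rabs (y' - y) < d ->
    (beta * Z y < 1 -> beta * Z y' < 1) /\ (1 < beta * Z y -> 1 < beta * Z y').
Proof.
  intros Hb Hy Hne.
  assert (He : 0 < Rabs (1 - beta * Z y) / beta)
    by (apply Rdiv_lt_0_compat; [apply Rabs_pos_lt|]; lra).
  destruct (Zq_continuous W q q_pos W_nonneg W_increasing y Hy _ He) as [d [Hd Hc]].
  exists d; split; auto; intros y' Hy' Hyd; apply same_side_of_1.
  specialize (Hc y' Hy' Hyd).
  rewrite <- Rmult_minus_distr_l, Rabs_mult, (Rabs_right beta) by lra.
  apply (Rmult_lt_compat_l beta) in Hc; [|lra].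
  replace (beta * (Rabs (1 - beta * Z y) / beta)) with (Rabs (1 - beta * Z y)) in Hc
    by (field; lra).
  exact Hc.
Qed.

Lemma Gamma_minimiser_Z_ge_1 (a b : R) : 0 < beta -> 0 < a <= b ->
  (forall a', 0 <= a' <= b -> Gm a b <= Gm a' b) -> 1 <= beta * Z (b - a).
Proof.
  intros Hb Ha Hmin; apply Rnot_lt_le; intro Hlt.
  destruct (scaled_Z_near (b - a) Hb ltac:(lra) ltac:(lra)) as [d [Hd Hnear]].
  set (a1 := a - Rmin (d / 2) a).
  pose proof (Rmin_l (d / 2) a); pose proof (Rmin_r (d / 2) a).
  assert (0 < Rmin (d / 2) a) by (apply Rmin_glb_lt; lra).
  assert (Hz1 : beta * Z (b - a1) < 1).
  { apply (Hnear (b - a1)); [unfold a1; lra | | exact Hlt].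
    unfold a1; replace (b - (a - Rmin (d / 2) a) - (b - a)) with (Rmin (d / 2) a) by ring.
    rewrite Rabs_right; lra. }
  pose proof (Hmin a1 ltac:(unfold a1; lra)).
  pose proof (Gamma_increasing_a a1 a b ltac:(unfold a1; lra) ltac:(unfold a1; lra) ltac:(lra) Hz1).
  lra.
Qed.

Lemma Gamma_minimiser_Z_le_1 (a b : R) : 0 < beta -> 0 <= a < b ->
  (forall a', 0 <= a' <= b -> Gm a b <= Gm a' b) -> beta * Z (b - a) <= 1.
Proof.
  intros Hb Ha Hmin; apply Rnot_lt_le; intro Hgt.
  destruct (scaled_Z_near (b - a) Hb ltac:(lra) ltac:(lra)) as [d [Hd Hnear]].
  set (a2 := a + Rmin (d / 2) (b - a)).
  pose proof (Rmin_l (d / 2) (b - a)); pose proof (Rmin_r (d / 2) (b - a)).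
  assert (0 < Rmin (d / 2) (b - a)) by (apply Rmin_glb_lt; lra).
  assert (Hz2 : 1 < beta * Z (b - a2)).
  { apply (Hnear (b - a2)); [unfold a2; lra | | exact Hgt].
    unfold a2; replace (b - (a + Rmin (d / 2) (b - a)) - (b - a)) with (- Rmin (d / 2) (b - a))
      by ring.
    rewrite Rabs_Ropp, Rabs_right; lra. }
  pose proof (Hmin a2 ltac:(unfold a2; lra)).
  pose proof (Gamma_decreasing_a a a2 b ltac:(lra) ltac:(unfold a2; lra) ltac:(unfold a2; lra) Hz2).
  lra.
Qed.

End GammaMonotone.

(** * The selected pair *)

Lemma NearOne_and (P Q : R -> Prop) :
  NearOne P -> NearOne Q -> NearOne (fun beta => P beta /\ Q beta).
Proof.
  intros [b1 [Hb1 HP]] [b2 [Hb2 HQ]]; exists (Rmax b1 b2).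
  pose proof (Rmax_l b1 b2); pose proof (Rmax_r b1 b2).
  split; [split; [lra | apply Rmax_lub_lt; lra]|].
  intros beta Hbeta; split; [apply HP | apply HQ]; lra.
Qed.

Lemma NearOne_impl (P Q : R -> Prop) : NearOne P ->
  (forall beta, 0 < beta < 1 -> P beta -> Q beta) -> NearOne Q.
Proof. intros [b0 [Hb0 HP]] HPQ; exists b0; split; auto; intros beta Hb; apply HPQ, HP; lra. Qed.

Lemma NearOne_gt (b1 : R) : b1 < 1 -> NearOne (fun beta => b1 < beta).
Proof.
  intros Hb1; exists (Rmax (/ 2) b1); pose proof (Rmax_l (/ 2) b1); pose proof (Rmax_r (/ 2) b1).
  split; [split; [lra | apply Rmax_lub_lt; lra]|]; intros; lra.
Qed.

Lemma NearOne_small (d e : R) : 0 < e -> NearOne (fun beta => Rabs ((1 - beta) * d) < e).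
Proof.
  intros He; pose proof (Rabs_pos d).
  assert (Hr : 0 < e / (Rabs d + 1)) by (apply Rdiv_lt_0_compat; lra).
  apply (NearOne_impl (fun beta => 1 - e / (Rabs d + 1) < beta)); [apply NearOne_gt; lra|].
  intros beta Hb Hlt; rewrite Rabs_mult, Rabs_right by lra.
  assert (Hlt' : 1 - beta < e / (Rabs d + 1)) by lra.
  apply (Rmult_lt_compat_r (Rabs d + 1)) in Hlt'; [|lra].
  replace (e / (Rabs d + 1) * (Rabs d + 1)) with e in Hlt' by (field; lra).
  nra.
Qed.

Lemma TendsTo0At1_of_NearOne (f : R -> R) :
  (forall eps, 0 < eps -> NearOne (fun beta => Rabs (f beta) < eps)) -> TendsTo0At1 f.
Proof.
  intros H eps Heps; destruct (H eps Heps) as [b0 [Hb0 Hf]].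
  exists (1 - b0); split; [lra|]; intros beta Hb; apply Hf; lra.
Qed.

Lemma TendsTo0At1_of_Zq (W : R -> R) (q : R) (f : R -> R) : 0 < q ->
  (forall x, 0 <= x -> 0 <= W x) -> (forall x y, 0 <= x -> x < y -> W x < W y) ->
  NearOne (fun beta => 0 <= f beta /\ beta * Zq W q (f beta) = 1) -> TendsTo0At1 f.
Proof.
  intros Hq HW0 HWinc Hf; apply TendsTo0At1_of_NearOne; intros eps Heps.
  pose proof (Zq_gt_1 W q Hq HW0 HWinc eps Heps).
  assert (Hinv : / Zq W q eps < 1) by (rewrite <- Rinv_1; apply Rinv_lt_contravar; lra).
  apply (NearOne_impl _ _ (NearOne_and _ _ Hf (NearOne_gt _ Hinv))).
  intros beta Hb [[Hf0 HZ] Hgt]; rewrite Rabs_right by lra.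
  apply Rnot_le_lt; intro Hge.
  pose proof (Zq_le W q Hq HW0 HWinc eps (f beta) ltac:(lra) Hge).
  apply (Rmult_lt_compat_r (Zq W q eps)) in Hgt; [|lra].
  rewrite Rinv_l in Hgt by lra; nra.
Qed.


Section SelectedPair.
Variables (WW W : R -> R) (q delta rho dX : R) (astar bstar : R -> R).
Hypotheses (q_pos : 0 < q) (delta_pos : 0 < delta).
Hypothesis W_nonneg : forall x, 0 <= x -> 0 <= W x.
Hypothesis W_increasing : forall x y, 0 <= x -> x < y -> W x < W y.
Hypothesis WW_nonneg : forall x, 0 <= x -> 0 <= WW x.
Hypothesis WW_increasing : forall x y, 0 <= x -> x < y -> WW x < WW y.
Hypothesis selected : forall beta, 0 < beta < 1 ->
  Selected (Gamma WW W q delta rho dX beta) (astar beta) (bstar beta).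

Notation Gm beta := (Gamma WW W q delta rho dX beta).
Notation Z := (Zq W q).
Let kappa := delta - q * rho - dX.

Lemma Gamma_0_0 (beta : R) : Gm beta 0 0 = kappa + (1 - beta) * dX.
Proof. rewrite Gamma_0_b, Zbarq_0 by auto; unfold kappa; ring. Qed.

Lemma selected_zero (beta : R) : 0 < beta < 1 -> Gm beta 0 0 <= 0 ->
  astar beta = 0 /\ bstar beta = 0.
Proof. intros Hb Hle; destruct (selected beta Hb) as [(_ & Ha & Hb') | [Hpos _]]; auto; lra. Qed.

Lemma bstar_le (beta : R) : 0 < beta < 1 -> 0 < Gm beta 0 0 ->
  0 < bstar beta /\ 0 <= astar beta <= bstar beta /\ q * beta * bstar beta <= Gm beta 0 0.
Proof.
  intros Hb Hpos.
  destruct (selected beta Hb) as [(Hle & _) | (_ & Hbs & (_ & Hmin) & _ & Has & _)]; [lra|].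
  repeat split; auto; try lra.
  pose proof (Hmin 0 ltac:(lra)) as HG; rewrite Gamma_0_b in HG by (auto; lra).
  rewrite Gamma_0_b, Zbarq_0 in Hpos |- * by (auto; lra).
  pose proof (Zbarq_ge W q q_pos W_nonneg W_increasing (bstar beta) ltac:(lra)).
  assert (q * beta * bstar beta <= q * beta * Zbarq W q (bstar beta))
    by (apply Rmult_le_compat_l; [nra | auto]).
  lra.
Qed.

(* If beta Z(b) <= 1, then Gamma(., b) is nondecreasing, its minimum sits at a = 0, and
   q beta Zbar(b) = Gamma(0, 0) forces b to be large. *)
Lemma selected_beta_Z_gt_1 (beta m : R) : 0 < beta < 1 -> 0 < m <= Gm beta 0 0 ->
  1 < beta * Z (m / q) -> 1 < beta * Z (bstar beta).
Proof.
  intros Hb Hm HZm.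
  destruct (selected beta Hb) as [(Hle & _) | (_ & Hbs & ((a0 & Ha0 & Hz) & Hmin) & _)]; [lra|].
  set (b := bstar beta) in *.
  apply Rnot_le_lt; intro HZb.
  assert (HG0 : Gm beta 0 b = 0).
  { pose proof (Hmin 0 ltac:(lra)).
    assert (Gm beta 0 b <= Gm beta a0 b).
    { apply (Gamma_nondecreasing_a WW W q delta rho dX beta); auto; try lra.
      rewrite Rminus_0_r; lra. }
    lra. }
  rewrite Gamma_0_b in HG0 by (auto; lra).
  rewrite Gamma_0_b, Zbarq_0 in Hm by (auto; lra).
  pose proof (Zbarq_le W q q_pos W_nonneg W_increasing b ltac:(lra)).
  assert (Hqb : m <= q * b).
  { assert (beta * Zbarq W q b <= b) by nra.
    assert (q * (beta * Zbarq W q b) <= q * b) by (apply Rmult_le_compat_l; lra).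
    nra. }
  assert (m / q <= b) by (apply (Rmult_le_reg_l q); [lra | unfold Rdiv; field_simplify; lra]).
  pose proof (Zq_le W q q_pos W_nonneg W_increasing (m / q) b
                ltac:(apply Rlt_le, Rdiv_lt_0_compat; lra) ltac:(lra)).
  nra.
Qed.

Lemma selected_first_order (beta : R) : 0 < beta < 1 -> 0 < Gm beta 0 0 ->
  1 < beta * Z (bstar beta) ->
  0 < astar beta < bstar beta /\ beta * Z (bstar beta - astar beta) = 1.
Proof.
  intros Hb Hpos HZb.
  destruct (selected beta Hb) as [(Hle & _) | (_ & Hbs & _ & _ & Has & Hamin & _)]; [lra|].
  set (a := astar beta) in *; set (b := bstar beta) in *.
  assert (Hle1 : 0 <= a < b -> beta * Z (b - a) <= 1)
    by (intros; apply (Gamma_minimiser_Z_le_1 WW W q delta rho dX beta); auto; lra).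
  assert (Hge1 : 0 < a <= b -> 1 <= beta * Z (b - a))
    by (intros; apply (Gamma_minimiser_Z_ge_1 WW W q delta rho dX beta); auto; lra).
  assert (Ha0 : a <> 0)
    by (intros E; rewrite E, Rminus_0_r in Hle1; pose proof (Hle1 ltac:(lra)); lra).
  assert (Hab : a <> b)
    by (intros E; rewrite E, Rminus_diag, Zq_0 in Hge1; pose proof (Hge1 ltac:(lra)); lra).
  split; [lra|]; apply Rle_antisym; [apply Hle1 | apply Hge1]; lra.
Qed.

Lemma selected_interior_near_one : 0 < kappa ->
  NearOne (fun beta => 0 < astar beta < bstar beta /\ Zq W q (bstar beta - astar beta) = / beta) /\
  TendsTo0At1 (fun beta => bstar beta - astar beta).
Proof.
  intros Hk; set (m := kappa / 2).
  assert (HZm : 1 < Z (m / q))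
    by (apply Zq_gt_1; auto; apply Rdiv_lt_0_compat; unfold m; lra).
  assert (Hinv : / Z (m / q) < 1) by (rewrite <- Rinv_1; apply Rinv_lt_contravar; lra).
  assert (Hcore : NearOne (fun beta => 0 < astar beta < bstar beta /\
                                      beta * Z (bstar beta - astar beta) = 1)).
  { apply (NearOne_impl _ _ (NearOne_and _ _ (NearOne_small dX m ltac:(unfold m; lra))
                                             (NearOne_gt _ Hinv))).
    intros beta Hb [Hsmall Hgt]; apply Rabs_def2 in Hsmall.
    assert (HG : m <= Gm beta 0 0) by (rewrite Gamma_0_0; unfold m in *; lra).
    apply selected_first_order; [auto | unfold m in *; lra |].
    apply (selected_beta_Z_gt_1 beta m); [auto | unfold m in *; lra |].
    apply (Rmult_lt_compat_r (Z (m / q))) in Hgt; [|lra].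
    rewrite Rinv_l in Hgt by lra; exact Hgt. }
  split.
  - apply (NearOne_impl _ _ Hcore); intros beta Hb [Hab HZ]; split; auto.
    apply (Rmult_eq_reg_l beta); [rewrite HZ; field|]; lra.
  - apply (TendsTo0At1_of_Zq W q); auto.
    apply (NearOne_impl _ _ Hcore); intros beta Hb [Hab HZ]; split; [lra | exact HZ].
Qed.

Lemma selected_zero_near_one : kappa < 0 -> NearOne (fun beta => astar beta = 0 /\ bstar beta = 0).
Proof.
  intros Hk; apply (NearOne_impl _ _ (NearOne_small dX (- kappa) ltac:(lra))).
  intros beta Hb Hsmall; apply Rabs_def2 in Hsmall.
  apply selected_zero; auto; rewrite Gamma_0_0; lra.
Qed.

Lemma selected_vanishing_critical : kappa = 0 -> 0 < dX ->
  (forall beta, 0 < beta < 1 -> 0 < bstar beta) /\ TendsTo0At1 astar /\ TendsTo0At1 bstar.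
Proof.
  intros Hk HdX.
  assert (Hbound : forall beta, 0 < beta < 1 ->
            0 < bstar beta /\ 0 <= astar beta <= bstar beta /\
            q * beta * bstar beta <= (1 - beta) * dX).
  { intros beta Hb; pose proof (bstar_le beta Hb) as H; rewrite Gamma_0_0, Hk, Rplus_0_l in H.
    apply H; nra. }
  assert (Hsmall : forall eps, 0 < eps ->
            NearOne (fun beta => Rabs (astar beta) < eps /\ Rabs (bstar beta) < eps)).
  { intros eps Heps.
    assert (Hqe : 0 < q * eps / 2) by (apply Rdiv_lt_0_compat; [apply Rmult_lt_0_compat|]; lra).
    apply (NearOne_impl _ _ (NearOne_and _ _ (NearOne_small dX (q * eps / 2) Hqe)
                                             (NearOne_gt (/ 2) ltac:(lra)))).
    intros beta Hb [Hs Hhalf]; apply Rabs_def2 in Hs.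
    destruct (Hbound beta Hb) as (Hb0 & Ha & Hqb).
    assert (0 <= q * bstar beta * (beta - / 2)) by (apply Rmult_le_pos; nra).
    assert (bstar beta < eps) by (apply (Rmult_lt_reg_l q); nra).
    rewrite !Rabs_right by lra; lra. }
  split; [intros; apply Hbound; auto|].
  split; apply TendsTo0At1_of_NearOne; intros eps Heps;
    (apply (NearOne_impl _ _ (Hsmall eps Heps)); intros beta _ [Ha Hb]; assumption).
Qed.

Lemma selected_zero_critical : kappa = 0 -> dX <= 0 ->
  forall beta, 0 < beta < 1 -> astar beta = 0 /\ bstar beta = 0.
Proof. intros Hk HdX beta Hb; apply selected_zero; auto; rewrite Gamma_0_0, Hk; nra. Qed.

End SelectedPair.

Theorem mainTheorem11
  (c s : R) (Pbar : R -> R) (q delta rho dY : R) (WW W : R -> R)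
  (astar bstar : R -> R) :
  LevyTriplet c s Pbar ->
  NotSubordinator c s Pbar ->
  0 < q -> 0 < delta ->
  RightDeriv0 (psiY c s Pbar) dY ->
  ScaleFun (psiY c s Pbar) q WW ->
  ScaleFun (fun theta => psiY c s Pbar theta + delta * theta) q W ->
  (forall beta, 0 < beta < 1 ->
     Selected (Gamma WW W q delta rho (dY + delta) beta) (astar beta) (bstar beta)) ->
  (* 1 *)
  (dY + q * rho < 0 ->
     NearOne (fun beta => 0 < astar beta < bstar beta /\
                          Zq W q (bstar beta - astar beta) = / beta) /\
     TendsTo0At1 (fun beta => bstar beta - astar beta)) /\
  (* 2 *)
  (dY + q * rho > 0 ->
     NearOne (fun beta => astar beta = 0 /\ bstar beta = 0)) /\
  (* 3 *)
  (dY + q * rho = 0 -> dY + delta > 0 ->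
     (forall beta, 0 < beta < 1 -> 0 < bstar beta) /\
     TendsTo0At1 astar /\ TendsTo0At1 bstar) /\
  (* 4 *)
  (dY + q * rho = 0 -> dY + delta <= 0 ->
     forall beta, 0 < beta < 1 -> astar beta = 0 /\ bstar beta = 0).
Proof.
  (* dY enters only through Gamma: the argument never uses that it is psi_Y'(0+). *)
  intros Levy Hns Hq Hd _ HSWW HSW Hsel.
  destruct (psiY_linear_lower_bound c s Pbar Levy Hns) as [eta [T [Heta Hpsi]]].
  assert (HWW0 : forall x, 0 <= x -> 0 <= WW x).
  { apply (ScaleFun_nonneg _ q WW HSWW), frequently_ge_of_linear_lower_bound; eauto. }
  assert (HW0 : forall x, 0 <= x -> 0 <= W x).
  { apply (ScaleFun_nonneg _ q W HSW), frequently_ge_of_linear_lower_bound.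
    exists eta, (Rmax T 0); split; auto; intros th Hth.
    pose proof (Rmax_l T 0); pose proof (Rmax_r T 0); pose proof (Hpsi th ltac:(lra)); nra. }
  destruct HSWW as (_ & _ & HWWinc & _); destruct HSW as (_ & _ & HWinc & _).
  pose proof (selected_interior_near_one WW W q delta rho (dY + delta) astar bstar) as Part1.
  pose proof (selected_zero_near_one WW W q delta rho (dY + delta) astar bstar) as Part2.
  pose proof (selected_vanishing_critical WW W q delta rho (dY + delta) astar bstar) as Part3.
  pose proof (selected_zero_critical WW W q delta rho (dY + delta) astar bstar) as Part4.
  split; [|split; [|split]]; intros.
  - apply Part1; auto; lra.
  - apply Part2; auto; lra.
  - apply Part3; auto; lra.
  - apply Part4; auto; lra.
Qed.
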